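(* (1) Given a family $(\ell_{s,t})_{(s,t)\in\Delta}$ of transition kernels of a branching process on $\mathbb N_0^*$, the functions $F_{s,t}(z)=\sum_{n\ge0}\ell_{s,t}(1,\{n\})z^n$, $z\in\mathbb D$, form a topological reverse evolution family in $\mathbb D$ contained in $\mathcal{PGF}$. (2) Conversely, given a topological reverse evolution family $(F_{s,t})_{(s,t)\in\Delta}$ in $\mathbb D$ contained in $\mathcal{PGF}$, there exists a unique family $(\ell_{s,t})_{(s,t)\in\Delta}$ of transition kernels of a branching process on $\mathbb N_0^*$ such that $F_{s,t}(z)=\sum_{n\ge0}\ell_{s,t}(1,\{n\})z^n$ for all $z\in\mathbb D$, $(s,t)\in\Delta$.
   Context: $\Delta=\{(s,t):0\le s\le t\}$, $\mathbb D=\{|z|<1\}$, $\mathbb N_0=\{0,1,2,\dots\}$, $\mathbb N_0^*=\mathbb N_0\cup\{\infty\}$ with its natural compact topology. A family of transition kernels of a branching process on $\mathbb N_0^*$ is a family $(\ell_{s,t})_{(s,t)\in\Delta}$ of transition kernels on $\mathbb N_0^*$ with: (L1) $\ell_{s,s}(n,\cdot)=\delta_n$; (L2) $\ell_{s,t}\star\ell_{t,u}=\ell_{s,u}$ for $s\le t\le u$, where $(k\star l)(x,B)=\int l(y,B)k(x,\mathrm dy)$; (L3) for each $n\in\mathbb N_0$, $(s,t)\mapsto\ell_{s,t}(n,\cdot)$ is weakly continuous into probability measures on $\mathbb N_0^*$; (L4) $\ell_{s,t}(m,\cdot)\ast\ell_{s,t}(n,\cdot)=\ell_{s,t}(m+n,\cdot)$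 for $m,n\in\mathbb N_0$; (L5) $\ell_{s,t}(0,\cdot)=\delta_0$; (L6) $\ell_{s,t}(\infty,\cdot)=\delta_\infty$. $\mathcal{PGF}$ is the set of power series $\sum_{n\ge0}p_nz^n$ with $p_n\ge0$, $\sum p_n\le1$, excluding the constant $1$; it is a subset of ${\sf Hol}(\mathbb D,\mathbb D)$. A topological reverse evolution family in $\mathbb D$ is $(F_{s,t})\subset{\sf Hol}(\mathbb D,\mathbb D)$ with $F_{s,s}={\rm id}$, $F_{s,u}=F_{s,t}\circ F_{t,u}$ ($s\le t\le u$), and $(s,t)\mapsto F_{s,t}$ continuous for locally uniform convergence. *)

From Stdlib Require Import Reals.
From Coquelicot Require Export Coquelicot.
Open Scope R_scope.

Inductive Ninf : Type := Fin (n : nat) | Inf.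

Definition Ninf_eq_dec (x y : Ninf) : {x = y} + {x <> y}.
Proof. decide equality. apply PeanoNat.Nat.eq_dec. Defined.

(** N_0^* is countable and its Borel σ-algebra (for the one-point
    compactification topology) is the full power set, so a probability
    measure on N_0^* is the same as a probability mass function, and a
    transition kernel on N_0^* is a map [k : Ninf -> Ninf -> R] with
    [k x] a probability mass function for every [x]:
    [k x y] = k(x,{y}). *)

Definition fin_mass (mu : Ninf -> R) : R := Series (fun n => mu (Fin n)).

Definition is_prob (mu : Ninf -> R) : Prop :=
  (forall x, 0 <= mu x) /\ ex_series (fun n => mu (Fin n)) /\
  fin_mass mu + mu Inf = 1.

Definition integ (mu : Ninf -> R) (f : Ninf -> R) : R :=
  Series (fun n => mu (Fin n) * f (Fin n)) + mu Inf * f Inf.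

Definition dirac (x : Ninf) : Ninf -> R :=
  fun y => if Ninf_eq_dec y x then 1 else 0.

Definition kstar (k l : Ninf -> Ninf -> R) : Ninf -> Ninf -> R :=
  fun x z => integ (k x) (fun y => l y z).

(** Convolution μ * ν: image of μ ⊗ ν under addition on N_0^*
    (with a + ∞ = ∞ + a = ∞).  For finite z: Σ_{i+j=z} μ(i)ν(j);
    for z = ∞: the mass of the pairs (∞,b) plus the pairs (a,∞), a finite. *)
Definition conv (mu nu : Ninf -> R) : Ninf -> R :=
  fun z => match z with
  | Fin k => sum_f_R0 (fun i => mu (Fin i) * nu (Fin (k - i))) k
  | Inf => mu Inf * (fin_mass nu + nu Inf) + fin_mass mu * nu Inf
  end.

(** continuous real functions on N_0^* (one-point compactification:
    finite points are isolated, neighbourhoods of ∞ are cofinite) *)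
Definition Ninf_continuous (f : Ninf -> R) : Prop :=
  is_lim_seq (fun n => f (Fin n)) (f Inf).

Definition in_Delta (s t : R) : Prop := 0 <= s /\ s <= t.

Definition cont_on_Delta (G : R -> R -> R) : Prop :=
  forall s t, in_Delta s t -> forall eps, 0 < eps ->
  exists del, 0 < del /\ forall s' t', in_Delta s' t' ->
    Rabs (s' - s) < del -> Rabs (t' - t) < del ->
    Rabs (G s' t' - G s t) < eps.

Record branching_kernels (l : R -> R -> Ninf -> Ninf -> R) : Prop := {
  bk_prob : forall s t x, in_Delta s t -> is_prob (l s t x);
  bk_L1 : forall s x y, 0 <= s -> l s s x y = dirac x y;
  bk_L2 : forall s t u x z, in_Delta s t -> t <= u ->
            kstar (l s t) (l t u) x z = l s u x z;
  bk_L3 : forall (n : nat) (f : Ninf -> R), Ninf_continuous f ->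
            cont_on_Delta (fun s t => integ (l s t (Fin n)) f);
  bk_L4 : forall s t (m n : nat) z, in_Delta s t ->
            conv (l s t (Fin m)) (l s t (Fin n)) z = l s t (Fin (m + n)) z;
  bk_L5 : forall s t y, in_Delta s t -> l s t (Fin 0) y = dirac (Fin 0) y;
  bk_L6 : forall s t y, in_Delta s t -> l s t Inf y = dirac Inf y
}.

Definition inD (z : C) : Prop := Cmod z < 1.

Definition Hol_DD (f : C -> C) : Prop :=
  (forall z, inD z -> @ex_derive C_AbsRing C_NormedModule f z) /\
  (forall z, inD z -> inD (f z)).

(** Locally
    uniform convergence on D = uniform convergence on each closed disc
    {|z| <= r}, r < 1 (every compact subset of D lies in such a disc). *)
Record top_rev_evol (F : R -> R -> C -> C) : Prop := {
  ev_hol : forall s t, in_Delta s t -> Hol_DD (F s t);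
  ev_id : forall s z, 0 <= s -> inD z -> F s s z = z;
  ev_comp : forall s t u z, in_Delta s t -> t <= u -> inD z ->
              F s u z = F s t (F t u z);
  ev_cont : forall s t, in_Delta s t -> forall r, 0 <= r < 1 ->
              forall eps, 0 < eps -> exists del, 0 < del /\
              forall s' t', in_Delta s' t' ->
                Rabs (s' - s) < del -> Rabs (t' - t) < del ->
                forall z, Cmod z <= r -> Cmod (F s' t' z - F s t z) < eps
}.

Definition in_PGF (f : C -> C) : Prop :=
  exists p : nat -> R,
    (forall n, 0 <= p n) /\ ex_series p /\ Series p <= 1 /\
    ~ (p 0%nat = 1 /\ forall n, (0 < n)%nat -> p n = 0) /\
    forall z, inD z -> is_pseries (fun n => RtoC (p n)) z (f z).

Definition gen_fun_of (l : R -> R -> Ninf -> Ninf -> R) (F : R -> R -> C -> C) : Prop :=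
  forall s t z, in_Delta s t -> inD z ->
    is_pseries (fun n => RtoC (l s t (Fin 1) (Fin n))) z (F s t z).

From Stdlib Require Import Reals Lra Lia ClassicalEpsilon.
From Coquelicot Require Import Coquelicot.
Open Scope R_scope.

(* By (L4)-(L5), [l s t (Fin m)] is the [m]-th convolution power of [l s t (Fin 1)], so the
   kernels are determined by the generating functions [F s t] of the one-particle laws.
   Chapman-Kolmogorov (L2), with (L6), becomes [F s u = F s t o F t u]; (L1) becomes
   [F s s = id]; and weak continuity (L3) matches locally uniform continuity of [F]:
   coefficients bounded by 1 control the series uniformly on [|z| <= r < 1], and conversely
   the coefficients are recovered one at a time from the values on [(0, 1)]. The delicate point
   of (1) is that [F s t] maps the disc into itself, i.e. [l s t (Fin 1) (Fin 0) < 1], which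
   follows by a continuity induction on Delta. Uniqueness in (2) is the identity theorem for
   power series with summable coefficients. *)

Lemma pow_between_0_1 x n : 0 <= x <= 1 -> 0 <= x ^ n <= 1.
Proof. intro Hx. split; [apply pow_le; lra|]. rewrite <- (pow1 n). apply pow_incr; lra. Qed.

Lemma sum_f_R0_le_Series (a : nat -> R) N :
  (forall n, 0 <= a n) -> ex_series a -> sum_f_R0 a N <= Series a.
Proof.
  intros Ha [l Hl]. rewrite (is_series_unique _ _ Hl).
  apply is_lim_seq_incr_compare.
  - apply is_lim_seq_ext with (sum_n a); [intro; apply sum_n_Reals|exact Hl].
  - intro n; simpl; specialize (Ha (S n)); lra.
Qed.

Lemma Series_nonneg (a : nat -> R) : (forall n, 0 <= a n) -> ex_series a -> 0 <= Series a.
Proof.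
  intros Ha He. apply Rle_trans with (a 0%nat); [apply Ha|].
  exact (sum_f_R0_le_Series a 0 Ha He).
Qed.

Lemma term_le_Series (a : nat -> R) n : (forall n, 0 <= a n) -> ex_series a -> a n <= Series a.
Proof.
  intros Ha He. apply Rle_trans with (sum_f_R0 a n); [|now apply sum_f_R0_le_Series].
  destruct n; simpl; [lra|]. assert (0 <= sum_f_R0 a n) by (apply cond_pos_sum; auto). lra.
Qed.

Lemma Series_shift_le (a : nat -> R) k : (forall n, 0 <= a n) -> ex_series a ->
  Series (fun j => a (k + j)%nat) <= Series a.
Proof.
  intros Ha He. destruct k as [|k]; [right; now apply Series_ext|].
  rewrite (Series_incr_n a (S k)) by (auto; lia). simpl pred.
  assert (0 <= sum_f_R0 a k) by (apply cond_pos_sum; auto). lra.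
Qed.

Lemma Series_le_Series (a b : nat -> R) :
  (forall n, a n <= b n) -> ex_series a -> ex_series b -> Series a <= Series b.
Proof.
  intros H Ha Hb. apply Rminus_le_0. rewrite <- Series_minus by assumption.
  apply Series_nonneg; [intro n; specialize (H n); lra|]. now apply (ex_series_minus (V:=R_NormedModule)).
Qed.

Lemma ex_series_nonneg_bounded (a : nat -> R) M :
  (forall n, 0 <= a n) -> (forall N, sum_f_R0 a N <= M) -> ex_series a /\ Series a <= M.
Proof.
  intros Ha HM.
  destruct (growing_cv (fun N => sum_f_R0 a N)) as [l Hl].
  - intro n; simpl; specialize (Ha (S n)); lra.
  - exists M; intros x [N ->]; apply HM.
  - assert (Hs : is_series a l) by now apply is_series_Reals.
    split; [now exists l|]. rewrite (is_series_unique _ _ Hs).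
    apply is_lim_seq_Reals in Hl.
    exact (is_lim_seq_le _ _ _ _ HM Hl (is_lim_seq_const M)).
Qed.

Lemma Series_sum_f_R0 (a : nat -> nat -> R) K :
  (forall k, ex_series (a k)) ->
  ex_series (fun n => sum_f_R0 (fun k => a k n) K) /\
  Series (fun n => sum_f_R0 (fun k => a k n) K) = sum_f_R0 (fun k => Series (a k)) K.
Proof.
  intro He. induction K as [|K [IH1 IH2]]; simpl; [easy|].
  split; [now apply (ex_series_plus (V:=R_NormedModule))|]. rewrite Series_plus by auto. now rewrite IH2.
Qed.

Lemma Series_swap_nonneg (a : nat -> nat -> R) :
  (forall k n, 0 <= a k n) -> (forall k, ex_series (a k)) ->
  ex_series (fun k => Series (a k)) ->
  (forall n, ex_series (fun k => a k n)) /\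
  ex_series (fun n => Series (fun k => a k n)) /\
  Series (fun n => Series (fun k => a k n)) = Series (fun k => Series (a k)).
Proof.
  intros Hp Hr Hs.
  assert (HrP : forall k, 0 <= Series (a k)) by (intro; apply Series_nonneg; auto).
  assert (Hc : forall n, ex_series (fun k => a k n) /\ Series (fun k => a k n) <= Series (fun k => Series (a k))).
  { intro n. apply ex_series_nonneg_bounded; [auto|]. intro N.
    eapply Rle_trans; [|apply (sum_f_R0_le_Series _ N HrP Hs)].
    apply sum_Rle; intros k _. apply term_le_Series; auto. }
  assert (HcP : forall n, 0 <= Series (fun k => a k n)) by (intro; apply Series_nonneg; auto; apply Hc).
  assert (H1 : ex_series (fun n => Series (fun k => a k n)) /\
               Series (fun n => Series (fun k => a k n)) <= Series (fun k => Series (a k))).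
  { apply ex_series_nonneg_bounded; auto. intro N.
    destruct (Series_sum_f_R0 (fun n k => a k n) N (fun n => proj1 (Hc n))) as [E1 <-].
    apply Series_le_Series; auto. intro k. apply sum_f_R0_le_Series; auto. }
  split; [intro n; apply Hc|]. split; [apply H1|].
  apply Rle_antisym; [apply H1|].
  apply (ex_series_nonneg_bounded (fun k => Series (a k)) _ HrP). intro K.
  destruct (Series_sum_f_R0 a K Hr) as [E1 <-].
  apply Series_le_Series; auto; [|apply H1].
  intro n. apply sum_f_R0_le_Series; auto. apply Hc.
Qed.

(* Reduce to [Series_swap_nonneg] for [u + d] and [d]. *)
Lemma is_series_swap_R (u d : nat -> nat -> R) (r c : nat -> R) :
  (forall k n, Rabs (u k n) <= d k n) -> (forall k, ex_series (d k)) ->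
  ex_series (fun k => Series (d k)) ->
  (forall k, is_series (u k) (r k)) -> (forall n, is_series (fun k => u k n) (c n)) ->
  exists L, is_series r L /\ is_series c L.
Proof.
  intros Hud Hd Hds Hr Hc.
  assert (Hdp : forall k n, 0 <= d k n) by (intros k n; eapply Rle_trans; [apply Rabs_pos|apply Hud]).
  set (v := fun k n => u k n + d k n).
  assert (Hvp : forall k n, 0 <= v k n).
  { intros k n; unfold v; specialize (Hud k n). apply Rabs_le_between in Hud; lra. }
  assert (Hvr : forall k, is_series (v k) (r k + Series (d k))).
  { intro k. apply (is_series_plus (V:=R_NormedModule)); auto. now apply Series_correct. }
  assert (Hrk : forall k, Rabs (r k) <= Series (d k)).
  { intro k. rewrite <- (is_series_unique _ _ (Hr k)).
    eapply Rle_trans; [apply Series_Rabs, (ex_series_le (V:=R_CompleteNormedModule) _ (d k)); auto|].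
    { intro n; rewrite Rabs_Rabsolu; auto. }
    apply Series_le; auto. intro n; split; [apply Rabs_pos|auto]. }
  assert (Hvs : ex_series (fun k => Series (v k))).
  { apply (ex_series_le (V:=R_CompleteNormedModule) _ (fun k => 2 * Series (d k)));
      [|now apply (ex_series_scal_l (V:=R_NormedModule))].
    intro k. rewrite (is_series_unique _ _ (Hvr k)).
    specialize (Hrk k). apply Rabs_le_between in Hrk.
    change (Rabs (r k + Series (d k)) <= 2 * Series (d k)). rewrite Rabs_pos_eq; lra. }
  destruct (Series_swap_nonneg v Hvp (fun k => ex_intro _ _ (Hvr k)) Hvs) as [Fv1 [Fv2 Fv3]].
  destruct (Series_swap_nonneg d Hdp Hd Hds) as [Fd1 [Fd2 Fd3]].
  exists (Series (fun k => Series (v k)) - Series (fun k => Series (d k))). split.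
  - apply (is_series_ext (V:=R_NormedModule) (fun k => Series (v k) - Series (d k))).
    { intro k. change (Series (v k) - Series (d k) = r k). rewrite (is_series_unique _ _ (Hvr k)); ring. }
    apply (is_series_minus (V:=R_NormedModule)); now apply Series_correct.
  - rewrite <- Fv3, <- Fd3.
    apply (is_series_ext (V:=R_NormedModule) (fun n => Series (fun k => v k n) - Series (fun k => d k n))).
    { intro n. change (Series (fun k => v k n) - Series (fun k => d k n) = c n).
      unfold v. rewrite Series_plus; [|exists (c n); apply Hc|apply Fd1].
      rewrite (is_series_unique _ _ (Hc n)); ring. }
    apply (is_series_minus (V:=R_NormedModule)); now apply Series_correct.
Qed.

Lemma sum_n_Re (a : nat -> C) n : sum_n (fun k => Re (a k)) n = Re (sum_n a n).
Proof. induction n; [now rewrite !sum_O|]. rewrite !sum_Sn, IHn. reflexivity. Qed.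

Lemma sum_n_Im (a : nat -> C) n : sum_n (fun k => Im (a k)) n = Im (sum_n a n).
Proof. induction n; [now rewrite !sum_O|]. rewrite !sum_Sn, IHn. reflexivity. Qed.

Lemma is_series_Re (a : nat -> C) l : is_series a l -> is_series (fun n => Re (a n)) (Re l).
Proof.
  intro H. apply (filterlim_locally (F:=eventually)). intro eps.
  destruct (proj1 (filterlim_locally _ _) H eps) as [N HN]. exists N. intros n Hn.
  rewrite sum_n_Re. apply (HN n Hn).
Qed.

Lemma is_series_Im (a : nat -> C) l : is_series a l -> is_series (fun n => Im (a n)) (Im l).
Proof.
  intro H. apply (filterlim_locally (F:=eventually)). intro eps.
  destruct (proj1 (filterlim_locally _ _) H eps) as [N HN]. exists N. intros n Hn.
  rewrite sum_n_Im. apply (HN n Hn).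
Qed.

Lemma is_series_C_ReIm (a : nat -> C) x y :
  is_series (fun n => Re (a n)) x -> is_series (fun n => Im (a n)) y -> is_series a (x, y).
Proof.
  intros Hx Hy. apply (filterlim_locally (F:=eventually)). intro eps.
  destruct (proj1 (filterlim_locally _ _) Hx eps) as [N1 H1].
  destruct (proj1 (filterlim_locally _ _) Hy eps) as [N2 H2].
  exists (max N1 N2). intros n Hn. split.
  - rewrite <- sum_n_Re. apply H1; lia.
  - rewrite <- sum_n_Im. apply H2; lia.
Qed.

Lemma is_series_eventually_zero {K : AbsRing} {V : NormedModule K} (a : nat -> V) N :
  (forall k, (N < k)%nat -> a k = zero) -> is_series a (sum_n a N).
Proof.
  intro H. apply filterlim_locally. intro eps. exists N. intros n Hn.
  replace (sum_n a n) with (sum_n a N); [apply ball_center|].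
  induction Hn; auto. rewrite sum_Sn, H by lia. now rewrite plus_zero_r.
Qed.

Lemma is_series_single (a : nat -> R) m : (forall k, k <> m -> a k = 0) -> is_series a (a m).
Proof.
  intro H. replace (a m) with (sum_n a m).
  - apply (is_series_eventually_zero (V:=R_NormedModule)). intros k Hk; apply H; lia.
  - rewrite sum_n_Reals. destruct m; [reflexivity|]. simpl.
    rewrite sum_eq_R0 by (intros; apply H; lia). ring.
Qed.

Lemma is_series_RtoC (a : nat -> R) l : is_series a l -> is_series (fun n => RtoC (a n)) (RtoC l).
Proof.
  intro H. apply is_series_C_ReIm; [exact H|].
  assert (H0 := is_series_eventually_zero (V:=R_NormedModule) (fun _ => 0) 0 (fun _ _ => eq_refl)).
  rewrite sum_O in H0. exact H0.
Qed.

Lemma is_series_single_C (a : nat -> C) m : (forall k, k <> m -> a k = 0%C) -> is_series a (a m).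
Proof.
  intro H. rewrite (surjective_pairing (a m)).
  apply is_series_C_ReIm;
    [apply (is_series_single (fun n => Re (a n)))|apply (is_series_single (fun n => Im (a n)))];
    intros k Hk; now rewrite H.
Qed.

Lemma is_series_C_unique (a : nat -> C) l1 l2 : is_series a l1 -> is_series a l2 -> l1 = l2.
Proof. apply filterlim_locally_unique. Qed.

Lemma Cmod_is_series_le (a : nat -> C) (b : nat -> R) l :
  (forall n, Cmod (a n) <= b n) -> ex_series b -> is_series a l -> Cmod l <= Series b.
Proof.
  intros H [lb Hb] Ha. rewrite (is_series_unique _ _ Hb).
  assert (Hpartial : forall n, Cmod (sum_n a n) <= sum_n b n).
  { induction n; [rewrite !sum_O; apply H|].
    rewrite !sum_Sn. eapply Rle_trans; [apply Cmod_triangle|]. apply Rplus_le_compat; auto. }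
  assert (Hnorm : is_lim_seq (fun n => Cmod (sum_n a n)) (Cmod l))
    by (eapply filterlim_comp; [exact Ha|exact (filterlim_norm (V:=C_NormedModule) l)]).
  exact (is_lim_seq_le _ _ (Cmod l) lb Hpartial Hnorm Hb).
Qed.

Definition CSeries (a : nat -> C) : C := (Series (fun n => Re (a n)), Series (fun n => Im (a n))).

Lemma CSeries_correct (a : nat -> C) l : is_series a l -> CSeries a = l.
Proof.
  intro H. destruct l as [x y]. unfold CSeries. f_equal.
  - exact (is_series_unique _ _ (is_series_Re _ _ H)).
  - exact (is_series_unique _ _ (is_series_Im _ _ H)).
Qed.

Lemma is_series_swap_C (u : nat -> nat -> C) (d : nat -> nat -> R) (r c : nat -> C) :
  (forall k n, Cmod (u k n) <= d k n) -> (forall k, ex_series (d k)) ->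
  ex_series (fun k => Series (d k)) ->
  (forall k, is_series (u k) (r k)) -> (forall n, is_series (fun k => u k n) (c n)) ->
  exists L, is_series r L /\ is_series c L.
Proof.
  intros Hud Hd Hds Hr Hc.
  destruct (is_series_swap_R (fun k n => Re (u k n)) d (fun k => Re (r k)) (fun n => Re (c n)))
    as [x [Hx Hx']]; auto.
  { intros k n; eapply Rle_trans; [apply re_le_Cmod|apply Hud]. }
  { intro k; apply is_series_Re, Hr. }
  { intro n; apply is_series_Re, Hc. }
  destruct (is_series_swap_R (fun k n => Im (u k n)) d (fun k => Im (r k)) (fun n => Im (c n)))
    as [y [Hy Hy']]; auto.
  { intros k n; eapply Rle_trans; [|apply Hud]. eapply Rle_trans; [|apply Rmax_Cmod]. apply Rmax_r. }
  { intro k; apply is_series_Im, Hr. }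
  { intro n; apply is_series_Im, Hc. }
  exists (x, y); split; now apply is_series_C_ReIm.
Qed.

Lemma is_series_shift {K : AbsRing} {V : NormedModule K} (a : nat -> V) l i :
  is_series a l -> is_series (fun n => if (i <=? n)%nat then a (n - i)%nat else zero) l.
Proof.
  intro H. induction i.
  - apply (is_series_ext a); [|exact H]. intro n. now rewrite Nat.sub_0_r.
  - apply is_series_decr_1. simpl (S i <=? 0)%nat.
    replace (plus l (opp _)) with l; [exact IHi|].
    rewrite <- (plus_zero_r l) at 1. f_equal. symmetry. exact (@opp_zero (NormedModule.AbelianGroup K V)).
Qed.

Lemma CV_radius_ge_1 (a : nat -> R) : ex_series (fun n => Rabs (a n)) -> Rbar_le 1 (CV_radius a).
Proof.
  intro Ha. apply CV_radius_bounded. exists (Series (fun n => Rabs (a n))). intro n.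
  rewrite pow1, Rmult_1_r. apply (term_le_Series (fun n => Rabs (a n))); auto. intro; apply Rabs_pos.
Qed.

Lemma lt_CV_radius (a : nat -> R) x :
  ex_series (fun n => Rabs (a n)) -> Rabs x < 1 -> Rbar_lt (Rabs x) (CV_radius a).
Proof.
  intros Ha Hx. assert (H := CV_radius_ge_1 a Ha).
  destruct (CV_radius a) as [c| |]; simpl in *; auto; lra.
Qed.

Lemma ex_series_pow_le_1 (c : nat -> R) x :
  ex_series (fun n => Rabs (c n)) -> Rabs x <= 1 -> ex_series (fun n => c n * x ^ n).
Proof.
  intros Hc Hx. apply (ex_series_le (V:=R_CompleteNormedModule) _ (fun n => Rabs (c n))); auto.
  intro n. change (Rabs (c n * x ^ n) <= Rabs (c n)). rewrite Rabs_mult, <- RPow_abs.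
  assert (0 <= Rabs x ^ n <= 1) by (apply pow_between_0_1; split; [apply Rabs_pos|exact Hx]).
  assert (0 <= Rabs (c n)) by apply Rabs_pos. nra.
Qed.

(* The shifted series [PSeries e] vanishes on [(0, del)] and is continuous at [0], where it
   takes the value [d n]. *)
Lemma pseries_coef_zero (d : nat -> R) (del : R) : 0 < del -> ex_series (fun n => Rabs (d n)) ->
  (forall x, 0 < x < del -> Series (fun n => d n * x ^ n) = 0) -> forall n, d n = 0.
Proof.
  intros Hdel Hd H n. induction n as [n IH] using (well_founded_induction Wf_nat.lt_wf).
  set (e := fun k => d (n + k)%nat).
  assert (He : ex_series (fun k => Rabs (e k))) by (now apply (ex_series_incr_n (fun k => Rabs (d k)) n)).
  assert (Hzero : forall x, 0 < x < Rmin del 1 -> PSeries e x = 0).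
  { intros x [Hx0 Hx]. assert (Hx1 : x < 1) by (eapply Rlt_le_trans; [exact Hx|apply Rmin_r]).
    assert (Hxn : x ^ n <> 0) by (apply pow_nonzero; lra).
    apply (Rmult_eq_reg_l (x ^ n)); auto.
    rewrite Rmult_0_r, <- (H x) by (split; [lra|]; eapply Rlt_le_trans; [exact Hx|apply Rmin_l]).
    rewrite (Series_incr_n_aux (fun k => d k * x ^ k) n) by (intros k Hk; rewrite IH by lia; ring).
    unfold PSeries. rewrite <- Series_scal_l. apply Series_ext. intro k. unfold e. rewrite pow_add. ring. }
  assert (Hcont := PSeries_continuity e 0 ltac:(apply lt_CV_radius; auto; rewrite Rabs_R0; lra)).
  unfold continuity_pt, continue_in, limit1_in, limit_in in Hcont. simpl in Hcont.
  rewrite PSeries_0 in Hcont. replace (d n) with (e 0%nat) by (unfold e; f_equal; lia).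
  destruct (Req_dec (e 0%nat) 0) as [E|E]; [exact E|exfalso].
  destruct (Hcont (Rabs (e 0%nat)) ltac:(now apply Rabs_pos_lt)) as [alp [Halp Hclose]].
  set (x := Rmin alp (Rmin del 1) / 2).
  assert (Hx : 0 < x < Rmin del 1 /\ x < alp).
  { assert (0 < Rmin del 1) by (apply Rmin_pos; lra). assert (Rmin alp (Rmin del 1) <= alp) by apply Rmin_l.
    assert (Rmin alp (Rmin del 1) <= Rmin del 1) by apply Rmin_r.
    assert (0 < Rmin alp (Rmin del 1)) by (apply Rmin_pos; lra). unfold x; lra. }
  assert (Hxa : R_dist x 0 < alp) by (unfold R_dist; rewrite Rminus_0_r, Rabs_pos_eq; lra).
  assert (Hcl := Hclose x (conj (conj I (not_eq_sym (Rgt_not_eq _ _ (proj1 (proj1 Hx))))) Hxa)).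
  unfold R_dist in Hcl. rewrite Hzero in Hcl by lra. rewrite Rminus_0_l, Rabs_Ropp in Hcl. lra.
Qed.

Lemma pseries_coef_eq (a b : nat -> R) (del : R) : 0 < del ->
  ex_series (fun n => Rabs (a n)) -> ex_series (fun n => Rabs (b n)) ->
  (forall x, 0 < x < del -> Series (fun n => a n * x ^ n) = Series (fun n => b n * x ^ n)) ->
  forall n, a n = b n.
Proof.
  intros Hdel Ha Hb H n. apply Rminus_diag_uniq.
  apply (pseries_coef_zero (fun n => a n - b n) (Rmin del 1)); [apply Rmin_pos; lra| |].
  - apply (ex_series_le (V:=R_CompleteNormedModule) _ (fun n => Rabs (a n) + Rabs (b n))).
    + intro k. change (Rabs (Rabs (a k - b k)) <= Rabs (a k) + Rabs (b k)).
      rewrite Rabs_Rabsolu. unfold Rminus. rewrite <- (Rabs_Ropp (b k)). apply Rabs_triang.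
    + now apply (ex_series_plus (V:=R_NormedModule)).
  - intros x Hx. assert (Rmin del 1 <= del) by apply Rmin_l. assert (Rmin del 1 <= 1) by apply Rmin_r.
    assert (Hx1 : Rabs x <= 1) by (rewrite Rabs_pos_eq; lra).
    rewrite (Series_ext _ (fun n => a n * x ^ n - b n * x ^ n)) by (intro; ring).
    rewrite Series_minus by (now apply ex_series_pow_le_1). rewrite H; [ring|lra].
Qed.

Lemma Cmod_pow_remainder_le (z h : C) n :
  Cmod ((z + h) ^ n - z ^ n - RtoC (INR n) * h * z ^ (n - 1))%C <=
  (Cmod z + Cmod h) ^ n - Cmod z ^ n - INR n * Cmod h * Cmod z ^ (n - 1).
Proof.
  induction n.
  - simpl. replace (1 - 1 - RtoC 0 * h * 1)%C with (RtoC 0) by (apply injective_projections; simpl; ring).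
    rewrite Cmod_0. lra.
  - set (r := Cmod z) in *. set (e := Cmod h) in *.
    replace ((z + h) ^ S n - z ^ S n - RtoC (INR (S n)) * h * z ^ (S n - 1))%C
      with ((z + h) * ((z + h) ^ n - z ^ n - RtoC (INR n) * h * z ^ (n - 1)) + RtoC (INR n) * h * h * z ^ (n - 1))%C
      by (destruct n; [apply injective_projections; simpl; ring|];
          rewrite Nat.sub_succ, Nat.sub_0_r, !S_INR, !RtoC_plus; simpl; ring).
    replace ((r + e) ^ S n - r ^ S n - INR (S n) * e * r ^ (S n - 1))
      with ((r + e) * ((r + e) ^ n - r ^ n - INR n * e * r ^ (n - 1)) + INR n * e * e * r ^ (n - 1))
      by (destruct n; [simpl; ring|]; rewrite Nat.sub_succ, Nat.sub_0_r, !S_INR; simpl; ring).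
    eapply Rle_trans; [apply Cmod_triangle|]. rewrite !Cmod_mult, Cmod_R, Cmod_pow, Rabs_pos_eq by apply pos_INR.
    fold r e. apply Rplus_le_compat; [|lra].
    apply Rmult_le_compat; [apply Cmod_ge_0|apply Cmod_ge_0|apply Cmod_triangle|exact IHn].
Qed.

Lemma is_pseries_RtoC_iff (p : nat -> R) z l :
  is_pseries (fun n => RtoC (p n)) z l <-> is_series (fun n => RtoC (p n) * z ^ n)%C l.
Proof.
  unfold is_pseries. split; apply is_series_ext; intro n; apply Cmult_comm.
Qed.

Section Holomorphy.

Variable p : nat -> R.
Hypothesis p_nonneg : forall n, 0 <= p n.
Hypothesis p_summable : ex_series p.

Let p_abs : ex_series (fun n => Rabs (p n)).
Proof. apply (ex_series_ext p); auto. intro n; now rewrite Rabs_pos_eq. Qed.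

Lemma ex_series_pseries_C (z : C) : Cmod z <= 1 -> exists l, is_series (fun n => RtoC (p n) * z ^ n)%C l.
Proof.
  intro Hz. apply (ex_series_le (V:=C_CompleteNormedModule) _ p); auto. intro n.
  change (Cmod (RtoC (p n) * z ^ n) <= p n). rewrite Cmod_mult, Cmod_R, Cmod_pow, Rabs_pos_eq by auto.
  assert (0 <= Cmod z ^ n <= 1) by (apply pow_between_0_1; split; [apply Cmod_ge_0|auto]).
  specialize (p_nonneg n). nra.
Qed.

Lemma Cmod_pseries_remainder_le (F : C -> C) (z h Dz : C) :
  (forall y, inD y -> is_series (fun n => RtoC (p n) * y ^ n)%C (F y)) ->
  is_series (fun n => RtoC (PS_derive p n) * z ^ n)%C Dz ->
  Cmod z + Cmod h < 1 ->
  Cmod (F (z + h) - F z - h * Dz)%C <=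
  PSeries p (Cmod z + Cmod h) - PSeries p (Cmod z) - Cmod h * PSeries (PS_derive p) (Cmod z).
Proof.
  intros HF HDz Hzh.
  assert (Hr : 0 <= Cmod z) by apply Cmod_ge_0. assert (He : 0 <= Cmod h) by apply Cmod_ge_0.
  assert (Hrad : forall x, 0 <= x < 1 -> Rbar_lt (Rabs x) (CV_radius p))
    by (intros x Hx; apply lt_CV_radius; [exact p_abs|rewrite Rabs_pos_eq; lra]).
  assert (HC : is_series (fun n => RtoC (p n) * ((z + h) ^ n - z ^ n - RtoC (INR n) * h * z ^ (n - 1)))%C
                 (F (z + h) - F z - h * Dz)%C).
  { assert (H1 := HF (z + h)%C ltac:(unfold inD; eapply Rle_lt_trans; [apply Cmod_triangle|exact Hzh])).
    assert (H2 := HF z ltac:(unfold inD; lra)).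
    assert (H3 := is_series_shift _ _ 1 (is_series_scal_l (V:=C_NormedModule) h _ _ HDz)).
    assert (H4 := is_series_minus _ _ _ _ (is_series_minus _ _ _ _ H1 H2) H3).
    eapply is_series_ext; [|exact H4]. intro n. destruct n.
    - change (RtoC (p 0%nat) * 1 - RtoC (p 0%nat) * 1 - 0 = RtoC (p 0%nat) * (1 - 1 - RtoC 0 * h * 1))%C. ring.
    - change (RtoC (p (S n)) * (z + h) ^ S n - RtoC (p (S n)) * z ^ S n
              - h * (RtoC (PS_derive p (S n - 1)) * z ^ (S n - 1))
              = RtoC (p (S n)) * ((z + h) ^ S n - z ^ S n - RtoC (INR (S n)) * h * z ^ (S n - 1)))%C.
      rewrite Nat.sub_succ, Nat.sub_0_r. unfold PS_derive. rewrite RtoC_mult. simpl Cpow. ring. }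
  set (r := Cmod z) in *. set (e := Cmod h) in *.
  assert (HR : is_series (fun n => p n * ((r + e) ^ n - r ^ n - INR n * e * r ^ (n - 1)))
                 (PSeries p (r + e) - PSeries p r - e * PSeries (PS_derive p) r)).
  { assert (H1 := PSeries_correct p (r + e) (CV_radius_inside _ _ (Hrad (r + e) ltac:(lra)))).
    assert (H2 := PSeries_correct p r (CV_radius_inside _ _ (Hrad r ltac:(lra)))).
    assert (H3 := PSeries_correct (PS_derive p) r (ex_pseries_derive _ _ (Hrad r ltac:(lra)))).
    apply is_pseries_R in H1, H2, H3.
    assert (H4 := is_series_shift _ _ 1 (is_series_scal_l (V:=R_NormedModule) e _ _ H3)).
    assert (H5 := is_series_minus _ _ _ _ (is_series_minus _ _ _ _ H1 H2) H4).
    eapply is_series_ext; [|exact H5]. intro n. destruct n.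
    - change (p 0%nat * 1 - p 0%nat * 1 + - 0 = p 0%nat * (1 - 1 - 0 * e * 1)). ring.
    - change (p (S n) * (r + e) ^ S n - p (S n) * r ^ S n - e * (PS_derive p (S n - 1) * r ^ (S n - 1))
              = p (S n) * ((r + e) ^ S n - r ^ S n - INR (S n) * e * r ^ (S n - 1))).
      rewrite Nat.sub_succ, Nat.sub_0_r. unfold PS_derive. ring. }
  rewrite <- (is_series_unique _ _ HR).
  refine (Cmod_is_series_le _ _ _ _ (ex_intro _ _ HR) HC). intro n.
  rewrite Cmod_mult, Cmod_R, Rabs_pos_eq by auto.
  apply Rmult_le_compat_l; [auto|apply Cmod_pow_remainder_le].
Qed.

(* [Cmod_pseries_remainder_le] reduces complex differentiability at [z] to real
   differentiability of [PSeries p] at [Cmod z]. *)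
Lemma ex_derive_pseries_C (F : C -> C) :
  (forall z, inD z -> is_series (fun n => RtoC (p n) * z ^ n)%C (F z)) ->
  forall z, inD z -> @ex_derive C_AbsRing C_NormedModule F z.
Proof.
  intros HF z Hz. unfold inD in Hz. set (r := Cmod z) in *.
  assert (Hr0 : 0 <= r) by apply Cmod_ge_0.
  assert (Hrad : Rbar_lt (Rabs r) (CV_radius p)) by (apply lt_CV_radius; [exact p_abs|rewrite Rabs_pos_eq; auto]).
  destruct (ex_series_le (V:=C_CompleteNormedModule) (fun k => RtoC (PS_derive p k) * z ^ k)%C
              (fun n => Rabs (PS_derive p n * r ^ n))) as [Dz HDz].
  { intro n. change (Cmod (RtoC (PS_derive p n) * z ^ n) <= Rabs (PS_derive p n * r ^ n)).
    rewrite Cmod_mult, Cmod_R, Cmod_pow, Rabs_mult, <- RPow_abs, (Rabs_pos_eq r); auto. right; reflexivity. }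
  { apply CV_disk_inside. rewrite CV_radius_derive. exact Hrad. }
  exists Dz. split; [apply is_linear_scal_l|].
  intros x Hx. apply (@is_filter_lim_locally_unique C_AbsRing (AbsRing_NormedModule C_AbsRing)) in Hx. subst x.
  intro eps.
  destruct (proj1 (is_derive_Reals _ _ _) (is_derive_PSeries p r Hrad) eps (cond_pos eps)) as [del Hdel].
  set (rho := Rmin del ((1 - r) / 2)).
  assert (Hrho : 0 < rho) by (apply Rmin_pos; [apply cond_pos|lra]).
  assert (Hrho1 : rho <= del) by apply Rmin_l. assert (Hrho2 : rho <= (1 - r) / 2) by apply Rmin_r.
  exists (mkposreal rho Hrho). intros y Hy.
  change (Cmod (minus y z) < rho) in Hy.
  change (Cmod (minus (minus (F y) (F z)) (scal (minus y z) Dz)) <= eps * Cmod (minus y z)).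
  set (h := minus y z) in *. replace y with (z + h)%C by (unfold h; apply injective_projections; simpl; ring).
  change (Cmod (F (z + h) - F z - h * Dz)%C <= eps * Cmod h).
  eapply Rle_trans; [apply Cmod_pseries_remainder_le; auto; fold r; lra|]. fold r.
  destruct (Req_dec (Cmod h) 0) as [E0|E0].
  - rewrite E0, Rplus_0_r. lra.
  - specialize (Hdel (Cmod h) E0 ltac:(rewrite Rabs_pos_eq by apply Cmod_ge_0; lra)).
    assert (0 < Cmod h) by (assert (0 <= Cmod h) by apply Cmod_ge_0; lra).
    replace (PSeries p (r + Cmod h) - PSeries p r - Cmod h * PSeries (PS_derive p) r)
      with (Cmod h * ((PSeries p (r + Cmod h) - PSeries p r) / Cmod h - PSeries (PS_derive p) r)) by (field; lra).
    rewrite Rmult_comm. apply Rmult_le_compat_r; [lra|].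
    eapply Rle_trans; [apply Rle_abs|]. left. exact Hdel.
Qed.

End Holomorphy.

(* Bound the terms by [(eta + q^N) rho^n] with [rho = (1 + r) / 2] and [q = r / rho]. *)
Lemma small_pseries_C (r eps : R) : 0 <= r < 1 -> 0 < eps -> exists N eta, 0 < eta /\
  forall (d : nat -> R) (z l : C), (forall n, Rabs (d n) <= 1) ->
  (forall n, (n < N)%nat -> Rabs (d n) < eta) ->
  Cmod z <= r -> is_series (fun n => RtoC (d n) * z ^ n)%C l -> Cmod l < eps.
Proof.
  intros Hr Heps.
  set (rho := (1 + r) / 2). set (q := r / rho).
  assert (Hrho : 0 < rho < 1) by (unfold rho; lra).
  assert (Hq : 0 <= q < 1).
  { unfold q. split; [apply Rdiv_le_0_compat; lra|]. apply (Rmult_lt_reg_r rho); [lra|].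
    unfold Rdiv. rewrite Rmult_assoc, Rinv_l, Rmult_1_r by lra. unfold rho; lra. }
  set (eta := eps * (1 - rho) / 4).
  assert (Heta : 0 < eta) by (unfold eta; apply Rdiv_lt_0_compat; nra).
  destruct (pow_lt_1_zero q ltac:(rewrite Rabs_pos_eq; lra) eta Heta) as [N HN].
  assert (HqN : 0 <= q ^ N < eta).
  { specialize (HN N (le_n _)). rewrite Rabs_pos_eq in HN by (apply pow_le; lra).
    split; [apply pow_le; lra|exact HN]. }
  exists N, eta. split; [exact Heta|]. intros d z l Hd1 Hdsmall Hz Hl.
  assert (Hz0 : 0 <= Cmod z) by apply Cmod_ge_0.
  assert (Hterm : forall n, Cmod (RtoC (d n) * z ^ n) <= (eta + q ^ N) * rho ^ n).
  { intro n. rewrite Cmod_mult, Cmod_R, Cmod_pow.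
    assert (Hzr : Cmod z ^ n <= r ^ n) by (apply pow_incr; lra).
    assert (Hrr : r ^ n = q ^ n * rho ^ n) by (unfold q; rewrite <- Rpow_mult_distr; f_equal; field; lra).
    assert (0 <= Cmod z ^ n) by (apply pow_le; lra). assert (0 <= rho ^ n) by (apply pow_le; lra).
    assert (0 <= q ^ n) by (apply pow_le; lra). assert (0 <= Rabs (d n)) by apply Rabs_pos.
    destruct (Compare_dec.lt_dec n N) as [Hlt|Hge].
    - assert (Rabs (d n) < eta) by now apply Hdsmall.
      assert (r ^ n <= rho ^ n) by (apply pow_incr; unfold rho; lra). nra.
    - assert (q ^ n <= q ^ N).
      { replace n with (N + (n - N))%nat by lia. rewrite pow_add.
        assert (0 <= q ^ (n - N) <= 1) by (apply pow_between_0_1; lra). nra. }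
      specialize (Hd1 n). nra. }
  assert (Hgeom : ex_series (fun n => (eta + q ^ N) * rho ^ n))
    by (apply (ex_series_scal_l (V:=R_NormedModule)), ex_series_geom; rewrite Rabs_pos_eq; lra).
  eapply Rle_lt_trans; [exact (Cmod_is_series_le _ _ _ Hterm Hgeom Hl)|].
  rewrite Series_scal_l, Series_geom by (rewrite Rabs_pos_eq; lra).
  apply Rlt_le_trans with (2 * eta * / (1 - rho)).
  - apply Rmult_lt_compat_r; [apply Rinv_0_lt_compat; lra|lra].
  - replace (2 * eta * / (1 - rho)) with (eps / 2) by (unfold eta; field; lra). lra.
Qed.

Lemma Cmod_pow_le_1 (z : C) n : Cmod z <= 1 -> Cmod (z ^ n) <= 1.
Proof. intro Hz. rewrite Cmod_pow. apply pow_between_0_1. split; [apply Cmod_ge_0|exact Hz]. Qed.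

Lemma is_series_compose_C (a : nat -> R) (B : nat -> nat -> R) (z : C) (w : nat -> C) :
  (forall k, 0 <= a k) -> ex_series a -> (forall k n, 0 <= B k n) ->
  (forall k, ex_series (B k)) -> (forall k, Series (B k) <= 1) -> Cmod z <= 1 ->
  (forall k, is_series (fun n => RtoC (B k n) * z ^ n)%C (w k)) ->
  exists L, is_series (fun n => RtoC (Series (fun k => (a k * B k n)%R)) * z ^ n)%C L /\
            is_series (fun k => RtoC (a k) * w k)%C L.
Proof.
  intros Ha Hae HB HBe HB1 Hz Hw.
  set (d := fun k n => a k * B k n).
  assert (Hdp : forall k n, 0 <= d k n) by (intros; unfold d; apply Rmult_le_pos; auto).
  assert (Hdr : forall k, is_series (d k) (a k * Series (B k)))
    by (intro k; apply (is_series_scal_l (V:=R_NormedModule)), Series_correct, HBe).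
  assert (Hds : ex_series (fun k => Series (d k))).
  { apply (ex_series_le (V:=R_CompleteNormedModule) _ a); auto. intro k.
    change (Rabs (Series (d k)) <= a k). rewrite (is_series_unique _ _ (Hdr k)).
    assert (0 <= Series (B k)) by (apply Series_nonneg; auto).
    rewrite Rabs_pos_eq by (apply Rmult_le_pos; auto). specialize (Ha k); specialize (HB1 k). nra. }
  destruct (Series_swap_nonneg d Hdp (fun k => ex_intro _ _ (Hdr k)) Hds) as [Hcol _].
  destruct (is_series_swap_C (fun k n => RtoC (d k n) * z ^ n)%C d (fun k => RtoC (a k) * w k)%C
              (fun n => RtoC (Series (fun k => d k n)) * z ^ n)%C) as [L [Hrow Hcolumn]]; auto.
  - intros k n. rewrite Cmod_mult, Cmod_R, Rabs_pos_eq by auto.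
    assert (H1 := Cmod_pow_le_1 z n Hz). assert (0 <= Cmod (z ^ n)) by apply Cmod_ge_0.
    specialize (Hdp k n). nra.
  - intro k. now eexists.
  - intro k. eapply is_series_ext; [|exact (is_series_scal_l (RtoC (a k)) _ _ (Hw k))].
    intro n. unfold d. rewrite RtoC_mult. apply Cmult_assoc.
  - intro n. rewrite Cmult_comm. eapply is_series_ext;
      [|exact (is_series_scal_l (V:=C_NormedModule) (z ^ n)%C _ _
                 (is_series_RtoC _ _ (Series_correct _ (Hcol n))))].
    intro k. apply Cmult_comm.
  - exists L. split; [|exact Hrow].
    eapply is_series_ext; [|exact Hcolumn]. reflexivity.
Qed.

(** * Probability measures on N_0^* and generating functions *)

Lemma prob_fin_summable mu : is_prob mu -> ex_series (fun n => Rabs (mu (Fin n))).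
Proof.
  intros [H0 [He _]]. apply (ex_series_ext (fun n => mu (Fin n))); auto.
  intro n; now rewrite Rabs_pos_eq.
Qed.

Lemma prob_fin_mass mu : is_prob mu -> 0 <= fin_mass mu <= 1 /\ mu Inf = 1 - fin_mass mu.
Proof.
  intros [H0 [He Hs]]. assert (0 <= fin_mass mu) by (apply Series_nonneg; auto).
  specialize (H0 Inf). lra.
Qed.

Lemma prob_le_1 mu y : is_prob mu -> mu y <= 1.
Proof.
  intros Hp. destruct (prob_fin_mass mu Hp) as [[H0 H1] H2].
  destruct y as [n|]; [|lra]. destruct Hp as [Hnn [He _]].
  eapply Rle_trans; [apply (term_le_Series (fun n => mu (Fin n))); auto|exact H1].
Qed.

Lemma prob_ext_Fin mu nu : is_prob mu -> is_prob nu -> (forall n, mu (Fin n) = nu (Fin n)) ->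
  forall y, mu y = nu y.
Proof.
  intros Hm Hn H [n|]; auto.
  rewrite (proj2 (prob_fin_mass _ Hm)), (proj2 (prob_fin_mass _ Hn)).
  unfold fin_mass. now rewrite (Series_ext _ _ H).
Qed.

Lemma dirac_same x : dirac x x = 1.
Proof. unfold dirac. now destruct (Ninf_eq_dec x x). Qed.

Lemma dirac_other x y : y <> x -> dirac x y = 0.
Proof. intro H. unfold dirac. now destruct (Ninf_eq_dec y x). Qed.

Lemma dirac_prob x : is_prob (dirac x).
Proof.
  assert (Hd : forall y, 0 <= dirac x y) by (intro y; unfold dirac; destruct (Ninf_eq_dec y x); lra).
  assert (Hs : is_series (fun n => dirac x (Fin n)) (1 - dirac x Inf)).
  { destruct x as [m|].
    - rewrite dirac_other, Rminus_0_r by discriminate. rewrite <- (dirac_same (Fin m)).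
      apply (is_series_single (fun n => dirac (Fin m) (Fin n))). intros k Hk.
      apply dirac_other. congruence.
    - rewrite dirac_same, Rminus_diag. rewrite <- (dirac_other Inf (Fin 0)) by discriminate.
      apply (is_series_single (fun n => dirac Inf (Fin n))). intros k _. apply dirac_other. discriminate. }
  split; [exact Hd|]. split; [exact (ex_intro _ _ Hs)|]. unfold fin_mass. rewrite (is_series_unique _ _ Hs). ring.
Qed.

Lemma integ_dirac mu k : integ mu (dirac (Fin k)) = mu (Fin k).
Proof.
  unfold integ. rewrite (dirac_other (Fin k) Inf) by discriminate. rewrite Rmult_0_r, Rplus_0_r.
  transitivity (mu (Fin k) * dirac (Fin k) (Fin k)); [|rewrite dirac_same; ring].
  apply is_series_unique, (is_series_single (fun n => mu (Fin n) * dirac (Fin k) (Fin n))).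
  intros j Hj. rewrite dirac_other by congruence. ring.
Qed.

Lemma dirac_continuous k : Ninf_continuous (dirac (Fin k)).
Proof.
  unfold Ninf_continuous. rewrite dirac_other by discriminate.
  apply is_lim_seq_ext_loc with (fun _ => 0); [|apply is_lim_seq_const].
  exists (S k). intros n Hn. rewrite dirac_other; [reflexivity|]. intro E. injection E. lia.
Qed.

Definition pgf (mu : Ninf -> R) (x : R) : R := Series (fun n => mu (Fin n) * x ^ n).

Lemma ex_series_pgf mu x : is_prob mu -> Rabs x <= 1 -> ex_series (fun n => mu (Fin n) * x ^ n).
Proof.
  intros Hp Hx. apply ex_series_pow_le_1; [now apply prob_fin_summable|exact Hx].
Qed.

Lemma pgf_0 mu : pgf mu 0 = mu (Fin 0).
Proof.
  unfold pgf. replace (mu (Fin 0)) with (mu (Fin 0) * 0 ^ 0) by (simpl; ring).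
  apply is_series_unique, (is_series_single (fun n => mu (Fin n) * 0 ^ n)).
  intros k Hk. destruct k; [lia|]. simpl; ring.
Qed.

Lemma pgf_1 mu : pgf mu 1 = fin_mass mu.
Proof. unfold pgf, fin_mass. apply Series_ext; intro n; rewrite pow1; ring. Qed.

Lemma pgf_le_affine mu y : is_prob mu -> 0 <= y <= 1 ->
  0 <= pgf mu y <= mu (Fin 0) + y * (1 - mu (Fin 0)).
Proof.
  intros Hp Hy. assert (Hye := ex_series_pgf mu y Hp ltac:(rewrite Rabs_pos_eq; lra)).
  destruct (prob_fin_mass _ Hp) as [[F0 F1] _]. destruct Hp as [H0 [He _]].
  split; [apply Series_nonneg; auto; intro n; apply Rmult_le_pos; [auto|apply pow_le; lra]|].
  unfold pgf. rewrite Series_incr_1 by exact Hye. simpl. rewrite Rmult_1_r.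
  assert (HS := Series_incr_1 _ He). unfold fin_mass in F1.
  assert (He1 : ex_series (fun k => mu (Fin (S k)))) by now apply (ex_series_incr_1 (fun n => mu (Fin n))).
  assert (Series (fun k => mu (Fin (S k)) * (y * y ^ k)) <= y * Series (fun k => mu (Fin (S k)))).
  { rewrite <- Series_scal_l. apply Series_le; [|now apply (ex_series_scal_l (V:=R_NormedModule))].
    intro k. assert (0 <= y ^ k <= 1) by (apply pow_between_0_1; lra).
    specialize (H0 (Fin (S k))). assert (0 <= y * y ^ k <= y) by nra. split; nra. }
  nra.
Qed.

Lemma prob_eq_of_pgf mu nu (del : R) : is_prob mu -> is_prob nu -> 0 < del ->
  (forall x, 0 < x < del -> pgf mu x = pgf nu x) -> forall y, mu y = nu y.
Proof.
  intros Hm Hn Hd H. apply prob_ext_Fin; auto.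
  exact (pseries_coef_eq (fun n => mu (Fin n)) (fun n => nu (Fin n)) del Hd
           (prob_fin_summable _ Hm) (prob_fin_summable _ Hn) H).
Qed.

Definition pgfC (mu : Ninf -> R) (z : C) : C := CSeries (fun n => RtoC (mu (Fin n)) * z ^ n)%C.

Lemma is_series_pgfC mu z : is_prob mu -> Cmod z <= 1 ->
  is_series (fun n => RtoC (mu (Fin n)) * z ^ n)%C (pgfC mu z).
Proof.
  intros [H0 [He _]] Hz.
  destruct (ex_series_pseries_C (fun n => mu (Fin n)) (fun n => H0 (Fin n)) He z Hz) as [l Hl].
  unfold pgfC. now rewrite (CSeries_correct _ _ Hl).
Qed.

Lemma pgfC_RtoC mu x : is_prob mu -> Rabs x <= 1 -> pgfC mu (RtoC x) = RtoC (pgf mu x).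
Proof.
  intros Hp Hx. unfold pgfC. apply CSeries_correct.
  eapply is_series_ext; [|exact (is_series_RtoC _ _ (Series_correct _ (ex_series_pgf mu x Hp Hx)))].
  intro n. cbv beta. now rewrite RtoC_mult, RtoC_pow.
Qed.

Lemma Cmod_pgfC_le mu z : is_prob mu -> Cmod z <= 1 -> Cmod (pgfC mu z) <= pgf mu (Cmod z).
Proof.
  intros Hp Hz.
  refine (Cmod_is_series_le _ _ _ _ (ex_series_pgf mu _ Hp _) (is_series_pgfC mu z Hp Hz)).
  - intro n. rewrite Cmod_mult, Cmod_R, Cmod_pow, Rabs_pos_eq; [lra|apply Hp].
  - rewrite Rabs_pos_eq; auto. apply Cmod_ge_0.
Qed.

Lemma pgfC_ext mu nu z : (forall n, mu (Fin n) = nu (Fin n)) -> pgfC mu z = pgfC nu z.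
Proof. intro H. unfold pgfC, CSeries. f_equal; apply Series_ext; intro n; now rewrite H. Qed.

Lemma pgf_le_1 mu y : is_prob mu -> 0 <= y <= 1 -> pgf mu y <= 1.
Proof.
  intros Hp Hy. destruct (pgf_le_affine mu y Hp Hy) as [_ H].
  assert (0 <= mu (Fin 0) <= 1) by (split; [apply Hp|now apply prob_le_1]). nra.
Qed.

Lemma Cmod_pgfC_le_1 mu z : is_prob mu -> Cmod z <= 1 -> Cmod (pgfC mu z) <= 1.
Proof.
  intros Hp Hz. eapply Rle_trans; [now apply Cmod_pgfC_le|].
  apply pgf_le_1; auto. split; [apply Cmod_ge_0|auto].
Qed.

Lemma pgfC_at_0 mu : is_prob mu -> pgfC mu 0 = RtoC (mu (Fin 0)).
Proof. intro Hp. rewrite pgfC_RtoC, pgf_0 by (auto; rewrite Rabs_R0; lra). reflexivity. Qed.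

Lemma pgfC_dirac m z : pgfC (dirac (Fin m)) z = (z ^ m)%C.
Proof.
  unfold pgfC. apply CSeries_correct.
  replace (z ^ m)%C with (RtoC (dirac (Fin m) (Fin m)) * z ^ m)%C by (rewrite dirac_same; ring).
  apply (is_series_single_C (fun n => RtoC (dirac (Fin m) (Fin n)) * z ^ n)%C). intros k Hk.
  rewrite dirac_other by congruence. ring.
Qed.

Lemma is_series_conv_C mu nu z : is_prob mu -> is_prob nu -> Cmod z <= 1 ->
  is_series (fun n => RtoC (conv mu nu (Fin n)) * z ^ n)%C (pgfC mu z * pgfC nu z)%C.
Proof.
  intros Hm Hn Hz. assert (Hm0 := proj1 Hm). assert (Hme := proj1 (proj2 Hm)). assert (Hn0 := proj1 Hn).
  set (B := fun i n => if (i <=? n)%nat then nu (Fin (n - i)) else 0).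
  assert (HB : forall i, is_series (B i) (fin_mass nu)).
  { intro i. apply (is_series_shift (V:=R_NormedModule) (fun n => nu (Fin n))), Series_correct, Hn. }
  destruct (is_series_compose_C (fun i => mu (Fin i)) B z (fun i => z ^ i * pgfC nu z)%C)
    as [L [HL1 HL2]]; auto.
  - intros i n. unfold B. destruct (i <=? n)%nat; [apply Hn0|lra].
  - intro i. now exists (fin_mass nu).
  - intro i. rewrite (is_series_unique _ _ (HB i)). apply (prob_fin_mass _ Hn).
  - intro i. eapply is_series_ext;
      [|exact (is_series_scal_l (V:=C_NormedModule) (z ^ i)%C _ _
                 (is_series_shift _ _ i (is_series_pgfC nu z Hn Hz)))].
    intro n. unfold B. destruct (Nat.leb_spec i n).
    + change ((z ^ i * (RtoC (nu (Fin (n - i))) * z ^ (n - i)))%C = RtoC (nu (Fin (n - i))) * z ^ n)%C.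
      transitivity (RtoC (nu (Fin (n - i))) * z ^ (i + (n - i)))%C; [rewrite Cpow_add_r; ring|do 2 f_equal; lia].
    + change ((z ^ i * 0)%C = RtoC 0 * z ^ n)%C. ring.
  - replace (pgfC mu z * pgfC nu z)%C with L.
    + eapply is_series_ext; [|exact HL1]. intro n. cbv beta. do 2 f_equal.
      apply is_series_unique. unfold conv. rewrite <- sum_n_Reals.
      rewrite (sum_n_ext_loc _ (fun i => mu (Fin i) * B i n))
        by (intros i Hi; unfold B; now destruct (Nat.leb_spec i n); [|lia]).
      apply (is_series_eventually_zero (V:=R_NormedModule)). intros k Hk. unfold B.
      destruct (Nat.leb_spec k n); [lia|]. change (mu (Fin k) * 0 = 0). ring.
    + apply (is_series_C_unique _ _ _ HL2). rewrite Cmult_comm.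
      eapply is_series_ext; [|exact (is_series_scal_l (pgfC nu z) _ _ (is_series_pgfC mu z Hm Hz))].
      intro k. change (pgfC nu z * (RtoC (mu (Fin k)) * z ^ k) = RtoC (mu (Fin k)) * (z ^ k * pgfC nu z))%C. ring.
Qed.

Lemma conv_prob mu nu : is_prob mu -> is_prob nu -> is_prob (conv mu nu).
Proof.
  intros Hm Hn.
  assert (H := is_series_Re _ _ (is_series_conv_C mu nu 1 Hm Hn ltac:(rewrite Cmod_1; lra))).
  rewrite !pgfC_RtoC, !pgf_1 in H by (auto; rewrite Rabs_R1; lra).
  assert (Hs : is_series (fun n => conv mu nu (Fin n)) (fin_mass mu * fin_mass nu)).
  { replace (fin_mass mu * fin_mass nu) with (Re (RtoC (fin_mass mu) * RtoC (fin_mass nu))) by (simpl; ring).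
    eapply is_series_ext; [|exact H]. intro n. cbv beta. rewrite Cpow_1_l. simpl. ring. }
  destruct (prob_fin_mass _ Hm) as [_ Em]. destruct (prob_fin_mass _ Hn) as [_ En].
  split; [|split; [now exists (fin_mass mu * fin_mass nu)|]].
  - assert (Hm0 := proj1 Hm). assert (Hn0 := proj1 Hn). intros [k|]; simpl.
    + apply cond_pos_sum. intro; apply Rmult_le_pos; auto.
    + assert (0 <= mu Inf) by apply Hm0. assert (0 <= nu Inf) by apply Hn0.
      assert (0 <= fin_mass mu) by (apply Series_nonneg; [intro; apply Hm0|apply Hm]).
      rewrite En. nra.
  - unfold fin_mass at 1. rewrite (is_series_unique _ _ Hs). simpl. rewrite Em, En. ring.
Qed.

Lemma pgfC_conv mu nu z : is_prob mu -> is_prob nu -> Cmod z <= 1 ->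
  pgfC (conv mu nu) z = (pgfC mu z * pgfC nu z)%C.
Proof. intros Hm Hn Hz. exact (CSeries_correct _ _ (is_series_conv_C mu nu z Hm Hn Hz)). Qed.

Fixpoint conv_pow (mu : Ninf -> R) (m : nat) : Ninf -> R :=
  match m with O => dirac (Fin 0) | S m => conv mu (conv_pow mu m) end.

Lemma conv_pow_prob mu m : is_prob mu -> is_prob (conv_pow mu m).
Proof. intro H. induction m; simpl; [apply dirac_prob|now apply conv_prob]. Qed.

Lemma pgfC_conv_pow mu m z : is_prob mu -> Cmod z <= 1 -> pgfC (conv_pow mu m) z = (pgfC mu z ^ m)%C.
Proof.
  intros Hp Hz. induction m; simpl; [apply pgfC_dirac|].
  rewrite pgfC_conv, IHm by (auto; now apply conv_pow_prob). reflexivity.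
Qed.

Lemma pgf_conv_pow mu m x : is_prob mu -> Rabs x <= 1 -> pgf (conv_pow mu m) x = pgf mu x ^ m.
Proof.
  intros Hp Hx. apply RtoC_inj. rewrite RtoC_pow, <- !pgfC_RtoC by (auto; now apply conv_pow_prob).
  apply pgfC_conv_pow; auto. now rewrite Cmod_R.
Qed.

Lemma conv_ext mu mu' nu nu' y : (forall y, mu y = mu' y) -> (forall y, nu y = nu' y) ->
  conv mu nu y = conv mu' nu' y.
Proof.
  intros H1 H2. destruct y as [k|]; simpl.
  - apply sum_eq; intros; now rewrite H1, H2.
  - unfold fin_mass. rewrite !H1, !H2.
    now rewrite (Series_ext _ _ (fun n => H1 (Fin n))), (Series_ext _ _ (fun n => H2 (Fin n))).
Qed.

Lemma conv_pow_ext mu mu' m : (forall y, mu y = mu' y) -> forall y, conv_pow mu m y = conv_pow mu' m y.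
Proof. intro H. induction m; intro y; simpl; [reflexivity|]. now apply conv_ext. Qed.

Lemma pgf_dirac m x : Rabs x <= 1 -> pgf (dirac (Fin m)) x = x ^ m.
Proof.
  intro Hx. apply RtoC_inj. rewrite <- pgfC_RtoC by (auto using dirac_prob).
  now rewrite pgfC_dirac, RtoC_pow.
Qed.

Lemma pgf_conv mu nu x : is_prob mu -> is_prob nu -> Rabs x <= 1 -> pgf (conv mu nu) x = pgf mu x * pgf nu x.
Proof.
  intros Hm Hn Hx. apply RtoC_inj. rewrite RtoC_mult, <- !pgfC_RtoC by (auto using conv_prob).
  apply pgfC_conv; auto. now rewrite Cmod_R.
Qed.

Lemma conv_pow_1 mu : is_prob mu -> forall y, conv_pow mu 1 y = mu y.
Proof.
  intro Hp. apply (prob_eq_of_pgf _ _ 1); auto using conv_pow_prob; [lra|].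
  intros x Hx. rewrite pgf_conv_pow by (auto; rewrite Rabs_pos_eq; lra). ring.
Qed.

Lemma conv_pow_add mu m n : is_prob mu ->
  forall y, conv (conv_pow mu m) (conv_pow mu n) y = conv_pow mu (m + n) y.
Proof.
  intro Hp. apply (prob_eq_of_pgf _ _ 1); auto using conv_prob, conv_pow_prob; [lra|].
  intros x Hx. assert (Hx1 : Rabs x <= 1) by (rewrite Rabs_pos_eq; lra).
  rewrite pgf_conv, !pgf_conv_pow, pow_add by auto using conv_pow_prob. reflexivity.
Qed.

Lemma conv_pow_dirac_1 m : forall y, conv_pow (dirac (Fin 1)) m y = dirac (Fin m) y.
Proof.
  apply (prob_eq_of_pgf _ _ 1); auto using conv_pow_prob, dirac_prob; [lra|].
  intros x Hx. assert (Hx1 : Rabs x <= 1) by (rewrite Rabs_pos_eq; lra).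
  rewrite pgf_conv_pow, !pgf_dirac by auto using dirac_prob. now rewrite pow_1.
Qed.

Definition mixture (A : Ninf -> R) (B : nat -> Ninf -> R) : Ninf -> R :=
  fun y => Series (fun k => A (Fin k) * B k y) + A Inf * dirac Inf y.

Lemma kstar_mixture (k l : Ninf -> Ninf -> R) x y : (forall y, l Inf y = dirac Inf y) ->
  kstar k l x y = mixture (k x) (fun n => l (Fin n)) y.
Proof. intro H. unfold kstar, integ, mixture. now rewrite H. Qed.

Lemma mixture_Fin A B n : mixture A B (Fin n) = Series (fun k => A (Fin k) * B k (Fin n)).
Proof. unfold mixture. rewrite dirac_other by discriminate. ring. Qed.

Section Mixture.

Variables (A : Ninf -> R) (B : nat -> Ninf -> R).
Hypothesis A_prob : is_prob A.
Hypothesis B_prob : forall k, is_prob (B k).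

Let A_nonneg k : 0 <= A (Fin k). Proof. apply A_prob. Qed.
Let B_nonneg k y : 0 <= B k y. Proof. apply B_prob. Qed.

Let ex_series_mixed (y : Ninf) : ex_series (fun k => A (Fin k) * B k y).
Proof.
  apply (ex_series_le (V:=R_CompleteNormedModule) _ (fun k => A (Fin k))); [|apply A_prob]. intro k.
  change (Rabs (A (Fin k) * B k y) <= A (Fin k)). rewrite Rabs_pos_eq by (apply Rmult_le_pos; auto).
  assert (B k y <= 1) by now apply prob_le_1. specialize (A_nonneg k). specialize (B_nonneg k y). nra.
Qed.

Lemma mixture_prob : is_prob (mixture A B).
Proof.
  set (d := fun k n => A (Fin k) * B k (Fin n)).
  assert (Hfm : forall k, 0 <= fin_mass (B k) <= 1 /\ B k Inf = 1 - fin_mass (B k))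
    by (intro k; apply prob_fin_mass, B_prob).
  assert (Hrow : forall k, is_series (d k) (A (Fin k) * fin_mass (B k)))
    by (intro k; apply (is_series_scal_l (V:=R_NormedModule)), Series_correct, B_prob).
  assert (Hrows : ex_series (fun k => Series (d k))).
  { apply (ex_series_le (V:=R_CompleteNormedModule) _ (fun k => A (Fin k))); [|apply A_prob]. intro k.
    change (Rabs (Series (d k)) <= A (Fin k)). rewrite (is_series_unique _ _ (Hrow k)).
    specialize (Hfm k). specialize (A_nonneg k). rewrite Rabs_pos_eq; nra. }
  destruct (Series_swap_nonneg d (fun k n => Rmult_le_pos _ _ (A_nonneg k) (B_nonneg k _))
              (fun k => ex_intro _ _ (Hrow k)) Hrows) as [Hcol [Hcols Eswap]].
  split; [|split].
  - intros [n|].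
    + rewrite mixture_Fin. apply Series_nonneg; [intro; apply Rmult_le_pos; auto|apply Hcol].
    + unfold mixture. rewrite dirac_same. apply Rplus_le_le_0_compat; [|rewrite Rmult_1_r; apply A_prob].
      apply Series_nonneg; [intro; apply Rmult_le_pos; auto|apply ex_series_mixed].
  - apply (ex_series_ext (fun n => Series (fun k => d k n))); [intro n; now rewrite mixture_Fin|exact Hcols].
  - unfold fin_mass at 1. rewrite (Series_ext _ _ (fun n => mixture_Fin A B n)).
    change (Series (fun n => Series (fun k => d k n)) + mixture A B Inf = 1).
    unfold mixture. rewrite Eswap, dirac_same, Rmult_1_r.
    rewrite (Series_ext _ _ (fun k => is_series_unique _ _ (Hrow k))).
    rewrite <- Rplus_assoc, <- Series_plus;
      [|now apply (ex_series_ext _ _ (fun k => is_series_unique _ _ (Hrow k)))|apply ex_series_mixed].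
    rewrite (Series_ext _ (fun k => A (Fin k))) by (intro k; destruct (Hfm k) as [_ ->]; ring).
    apply A_prob.
Qed.

Lemma is_series_pgfC_mixture z : Cmod z <= 1 ->
  is_series (fun k => RtoC (A (Fin k)) * pgfC (B k) z)%C (pgfC (mixture A B) z).
Proof.
  intro Hz.
  destruct (is_series_compose_C (fun k => A (Fin k)) (fun k n => B k (Fin n)) z (fun k => pgfC (B k) z))
    as [L [HL1 HL2]]; auto; try apply A_prob.
  - intro k; apply B_prob.
  - intro k. apply (prob_fin_mass _ (B_prob k)).
  - intro k. now apply is_series_pgfC.
  - replace (pgfC (mixture A B) z) with L; [exact HL2|]. symmetry. apply CSeries_correct.
    eapply is_series_ext; [|exact HL1]. intro n. now rewrite mixture_Fin.
Qed.

Lemma pgf_mixture x : Rabs x <= 1 -> is_series (fun k => A (Fin k) * pgf (B k) x) (pgf (mixture A B) x).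
Proof.
  intro Hx. assert (H := is_series_Re _ _ (is_series_pgfC_mixture (RtoC x) ltac:(now rewrite Cmod_R))).
  rewrite pgfC_RtoC in H by (auto; apply mixture_prob).
  eapply is_series_ext; [|exact H]. intro k. cbv beta. rewrite pgfC_RtoC by auto. simpl. ring.
Qed.

End Mixture.

(** * Continuity on Delta *)

Lemma in_Delta_right s t u : in_Delta s t -> t <= u -> in_Delta t u.
Proof. intros [H1 H2] H3. split; lra. Qed.

Lemma in_Delta_trans s t u : in_Delta s t -> t <= u -> in_Delta s u.
Proof. intros [H1 H2] H3. split; lra. Qed.

Lemma cont_on_Delta_const c : cont_on_Delta (fun _ _ => c).
Proof. intros s t _ eps He. exists 1; split; [lra|]. intros. rewrite Rminus_diag, Rabs_R0; auto. Qed.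

Lemma cont_on_Delta_ext g h : (forall s t, in_Delta s t -> g s t = h s t) ->
  cont_on_Delta g -> cont_on_Delta h.
Proof.
  intros E Hg s t Hst eps He. destruct (Hg s t Hst eps He) as [del [Hdel H]].
  exists del; split; auto. intros s' t' Hst' Hs Ht. rewrite <- !E by auto. now apply H.
Qed.

Lemma cont_on_Delta_plus g h : cont_on_Delta g -> cont_on_Delta h -> cont_on_Delta (fun s t => g s t + h s t).
Proof.
  intros Hg Hh s t Hst eps He.
  destruct (Hg s t Hst (eps/2) ltac:(lra)) as [d1 [Hd1 H1]].
  destruct (Hh s t Hst (eps/2) ltac:(lra)) as [d2 [Hd2 H2]].
  exists (Rmin d1 d2); split; [now apply Rmin_pos|]. intros s' t' Hst' Hs Ht.
  assert (Rmin d1 d2 <= d1) by apply Rmin_l. assert (Rmin d1 d2 <= d2) by apply Rmin_r.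
  specialize (H1 s' t' Hst' ltac:(lra) ltac:(lra)). specialize (H2 s' t' Hst' ltac:(lra) ltac:(lra)).
  replace (g s' t' + h s' t' - (g s t + h s t)) with ((g s' t' - g s t) + (h s' t' - h s t)) by ring.
  eapply Rle_lt_trans; [apply Rabs_triang|]. lra.
Qed.

Lemma cont_on_Delta_mult g h : cont_on_Delta g -> cont_on_Delta h -> cont_on_Delta (fun s t => g s t * h s t).
Proof.
  intros Hg Hh s t Hst eps He.
  assert (0 <= Rabs (g s t)) by apply Rabs_pos. assert (0 <= Rabs (h s t)) by apply Rabs_pos.
  set (M := Rabs (g s t) + Rabs (h s t) + 1).
  assert (HM : 1 <= M) by (unfold M; lra).
  set (eta := Rmin 1 (eps / M)).
  assert (Heta : 0 < eta) by (apply Rmin_pos; [lra|apply Rdiv_lt_0_compat; lra]).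
  assert (Heta1 : eta <= 1) by apply Rmin_l.
  assert (HetaM : eta * M <= eps) by (apply (Rmult_le_reg_r (/ M)); [apply Rinv_0_lt_compat; lra|];
    rewrite Rmult_assoc, Rinv_r, Rmult_1_r by lra; apply Rmin_r).
  destruct (Hg s t Hst eta Heta) as [d1 [Hd1 H1]]. destruct (Hh s t Hst eta Heta) as [d2 [Hd2 H2]].
  exists (Rmin d1 d2); split; [now apply Rmin_pos|]. intros s' t' Hst' Hs Ht.
  assert (Rmin d1 d2 <= d1) by apply Rmin_l. assert (Rmin d1 d2 <= d2) by apply Rmin_r.
  specialize (H1 s' t' Hst' ltac:(lra) ltac:(lra)). specialize (H2 s' t' Hst' ltac:(lra) ltac:(lra)).
  set (a := g s' t' - g s t) in *. set (b := h s' t' - h s t) in *.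
  replace (g s' t' * h s' t' - g s t * h s t) with (a * b + g s t * b + h s t * a) by (unfold a, b; ring).
  eapply Rle_lt_trans; [apply Rabs_triang|]. eapply Rle_lt_trans; [apply Rplus_le_compat_r, Rabs_triang|].
  rewrite !Rabs_mult.
  assert (0 <= Rabs a) by apply Rabs_pos. assert (0 <= Rabs b) by apply Rabs_pos.
  assert (0 <= Rabs (g s t)) by apply Rabs_pos. assert (0 <= Rabs (h s t)) by apply Rabs_pos.
  assert (Rabs a * Rabs b < eta) by nra.
  assert (Rabs (g s t) * Rabs b <= Rabs (g s t) * eta) by nra.
  assert (Rabs (h s t) * Rabs a <= Rabs (h s t) * eta) by nra.
  unfold M in HetaM. nra.
Qed.

Lemma cont_on_Delta_sum (g : nat -> R -> R -> R) N :
  (forall i, cont_on_Delta (g i)) -> cont_on_Delta (fun s t => sum_f_R0 (fun i => g i s t) N).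
Proof.
  intro H. induction N; simpl; [apply H|].
  now apply (cont_on_Delta_plus (fun s t => sum_f_R0 (fun i => g i s t) N) (g (S N))).
Qed.

Lemma cont_on_Delta_approx (g : R -> R -> R) :
  (forall eps, 0 < eps -> exists h, cont_on_Delta h /\
     forall s t, in_Delta s t -> Rabs (g s t - h s t) <= eps) ->
  cont_on_Delta g.
Proof.
  intros Happ s t Hst eps He.
  destruct (Happ (eps / 4) ltac:(lra)) as [h [Hh Hgh]].
  destruct (Hh s t Hst (eps / 2) ltac:(lra)) as [del [Hdel Hd]].
  exists del; split; auto. intros s' t' Hst' Hs Ht.
  specialize (Hd s' t' Hst' Hs Ht). assert (H1 := Hgh s t Hst). assert (H2 := Hgh s' t' Hst').
  replace (g s' t' - g s t) with ((g s' t' - h s' t') + (h s' t' - h s t) - (g s t - h s t)) by ring.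
  unfold Rminus at 1. eapply Rle_lt_trans; [apply Rabs_triang|]. rewrite Rabs_Ropp.
  eapply Rle_lt_trans; [apply Rplus_le_compat_r, Rabs_triang|]. lra.
Qed.

Lemma cont_on_Delta_finite_family (g : nat -> R -> R -> R) : (forall j, cont_on_Delta (g j)) ->
  forall s t, in_Delta s t -> forall eta, 0 < eta -> forall N, exists del, 0 < del /\
  forall s' t', in_Delta s' t' -> Rabs (s' - s) < del -> Rabs (t' - t) < del ->
  forall j, (j < N)%nat -> Rabs (g j s' t' - g j s t) < eta.
Proof.
  intros Hg s t Hst eta Heta N. induction N as [|N [d1 [Hd1 H1]]].
  - exists 1; split; [lra|]. intros; lia.
  - destruct (Hg N s t Hst eta Heta) as [d2 [Hd2 H2]].
    exists (Rmin d1 d2); split; [now apply Rmin_pos|].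
    intros s' t' Hst' Hs Ht j Hj.
    assert (Rmin d1 d2 <= d1) by apply Rmin_l. assert (Rmin d1 d2 <= d2) by apply Rmin_r.
    destruct (Nat.eq_dec j N) as [->|Hne]; [apply H2; auto; lra|apply H1; auto; lra || lia].
Qed.

Lemma integ_near_partial_sum nu f eps N : is_prob nu ->
  (forall k, (N < k)%nat -> Rabs (f (Fin k) - f Inf) <= eps) ->
  Rabs (integ nu f - (f Inf + sum_f_R0 (fun k => nu (Fin k) * (f (Fin k) - f Inf)) N)) <= eps.
Proof.
  intros Hp Hf. destruct (prob_fin_mass _ Hp) as [[F0 F1] F2]. destruct Hp as [H0 [He _]].
  assert (Heps : 0 <= eps) by (eapply Rle_trans; [apply Rabs_pos|apply (Hf (S N)); lia]).
  set (g := fun k => nu (Fin k) * (f (Fin k) - f Inf)).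
  assert (Hnt : ex_series (fun j => nu (Fin (S N + j)))) by now apply (ex_series_incr_n (fun k => nu (Fin k))).
  assert (Hdom : forall j, Rabs (g (S N + j)%nat) <= eps * nu (Fin (S N + j))).
  { intro j. unfold g. rewrite Rabs_mult, Rabs_pos_eq, Rmult_comm by auto.
    apply Rmult_le_compat_r; [auto|]. apply Hf; lia. }
  assert (Hdom_ex : ex_series (fun j => eps * nu (Fin (S N + j))))
    by now apply (ex_series_scal_l (V:=R_NormedModule)).
  assert (Hg : ex_series g)
    by (apply (ex_series_incr_n g (S N)), (ex_series_le (V:=R_CompleteNormedModule) _ _ Hdom Hdom_ex)).
  assert (E : integ nu f = Series g + f Inf).
  { unfold integ. rewrite (Series_ext _ (fun k => g k + f Inf * nu (Fin k))) by (intro; unfold g; ring).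
    rewrite Series_plus, Series_scal_l by (auto; now apply (ex_series_scal_l (V:=R_NormedModule))).
    unfold fin_mass in F2. rewrite F2. ring. }
  assert (Htail : Series (fun j => nu (Fin (S N + j))) <= 1).
  { unfold fin_mass in F1. rewrite (Series_incr_n (fun k => nu (Fin k)) (S N)) in F1 by (auto; lia).
    assert (0 <= sum_f_R0 (fun k => nu (Fin k)) N) by (apply cond_pos_sum; auto). simpl pred in F1. lra. }
  rewrite E, (Series_incr_n g (S N)) by (auto; lia). simpl pred.
  replace (sum_f_R0 g N + Series (fun j => g (S N + j)%nat) + f Inf - (f Inf + sum_f_R0 g N))
    with (Series (fun j => g (S N + j)%nat)) by ring.
  assert (Habs : ex_series (fun j => Rabs (g (S N + j)%nat))).
  { refine (ex_series_le (V:=R_CompleteNormedModule) _ _ _ Hdom_ex). intro j.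
    change (Rabs (Rabs (g (S N + j)%nat)) <= eps * nu (Fin (S N + j))). rewrite Rabs_Rabsolu. apply Hdom. }
  eapply Rle_trans; [now apply Series_Rabs|].
  eapply Rle_trans; [apply Series_le; [intro j; split; [apply Rabs_pos|apply Hdom]|exact Hdom_ex]|].
  rewrite Series_scal_l. nra.
Qed.

Lemma integ_cont (nu : R -> R -> Ninf -> R) (f : Ninf -> R) :
  (forall s t, in_Delta s t -> is_prob (nu s t)) -> (forall k, cont_on_Delta (fun s t => nu s t (Fin k))) ->
  Ninf_continuous f -> cont_on_Delta (fun s t => integ (nu s t) f).
Proof.
  intros Hp Hc Hf. apply cont_on_Delta_approx. intros eps Heps.
  apply is_lim_seq_Reals in Hf. destruct (Hf eps Heps) as [N HN].
  exists (fun s t => f Inf + sum_f_R0 (fun k => nu s t (Fin k) * (f (Fin k) - f Inf)) N). split.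
  - apply cont_on_Delta_plus; [apply cont_on_Delta_const|].
    apply (cont_on_Delta_sum (fun k s t => nu s t (Fin k) * (f (Fin k) - f Inf))). intro k.
    apply (cont_on_Delta_mult (fun s t => nu s t (Fin k))); [apply Hc|apply cont_on_Delta_const].
  - intros s t Hst. apply integ_near_partial_sum; [now apply Hp|].
    intros k Hk. left. apply (HN k). lia.
Qed.

Definition pgf_tail (mu : Ninf -> R) (x : R) (k : nat) : R :=
  Series (fun j => mu (Fin (k + j)) * x ^ (k + j)).

Section PgfTail.

Variables (mu : Ninf -> R) (x : R).
Hypothesis mu_prob : is_prob mu.
Hypothesis x_range : 0 <= x <= 1.

Let ex_series_tail k : ex_series (fun j => mu (Fin (k + j)) * x ^ (k + j)).
Proof. apply (ex_series_incr_n (fun n => mu (Fin n) * x ^ n)), ex_series_pgf; auto. rewrite Rabs_pos_eq; lra. Qed.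

Lemma pgf_tail_S k : pgf_tail mu x k = mu (Fin k) * x ^ k + pgf_tail mu x (S k).
Proof.
  unfold pgf_tail. rewrite Series_incr_1 by apply ex_series_tail. rewrite Nat.add_0_r. f_equal.
  apply Series_ext. intro j. now rewrite Nat.add_succ_r.
Qed.

Lemma pgf_tail_bound k : 0 <= pgf_tail mu x k <= x ^ k.
Proof.
  destruct mu_prob as [H0 [He _]]. destruct (prob_fin_mass _ mu_prob) as [[_ F1] _].
  assert (Hxk : 0 <= x ^ k) by (apply pow_le; lra).
  split; [apply Series_nonneg; [intro j; apply Rmult_le_pos; [auto|apply pow_le; lra]|apply ex_series_tail]|].
  apply Rle_trans with (Series (fun j => x ^ k * mu (Fin (k + j)))).
  - apply Series_le_Series; [|apply ex_series_tail|].
    2: apply (ex_series_scal_l (V:=R_NormedModule)), (ex_series_incr_n (fun n => mu (Fin n))), He.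
    intro j. rewrite pow_add. assert (0 <= x ^ j <= 1) by now apply pow_between_0_1.
    specialize (H0 (Fin (k + j))). assert (x ^ k * x ^ j <= x ^ k) by nra. nra.
  - rewrite Series_scal_l. assert (Series (fun j => mu (Fin (k + j))) <= 1).
    { eapply Rle_trans; [apply (Series_shift_le (fun n => mu (Fin n))); auto|exact F1]. }
    nra.
Qed.

End PgfTail.

Lemma coef_cont_of_pgf_cont (nu : R -> R -> Ninf -> R) :
  (forall s t, in_Delta s t -> is_prob (nu s t)) ->
  (forall x, 0 < x < 1 -> cont_on_Delta (fun s t => pgf (nu s t) x)) ->
  forall k, cont_on_Delta (fun s t => nu s t (Fin k)).
Proof.
  intros Hp Hpgf.
  (* [x^-k] times the [k]-th tail is within [x] of the [k]-th coefficient. *)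
  assert (Hcoef : forall k, (forall x, 0 < x < 1 -> cont_on_Delta (fun s t => pgf_tail (nu s t) x k)) ->
                  cont_on_Delta (fun s t => nu s t (Fin k))).
  { intros k Hk. apply cont_on_Delta_approx. intros eps Heps.
    set (x := Rmin eps (1/2)).
    assert (Hx : 0 < x < 1) by (split; [apply Rmin_pos; lra|assert (x <= 1/2) by apply Rmin_r; lra]).
    assert (Hxe : x <= eps) by apply Rmin_l.
    assert (Hxk : 0 < x ^ k) by (apply pow_lt; lra).
    exists (fun s t => / x ^ k * pgf_tail (nu s t) x k). split.
    - apply (cont_on_Delta_mult (fun _ _ => / x ^ k)); [apply cont_on_Delta_const|now apply Hk].
    - intros s t Hst. rewrite (pgf_tail_S _ _ (Hp s t Hst)) by lra.
      destruct (pgf_tail_bound _ x (Hp s t Hst) ltac:(lra) (S k)) as [T0 T1].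
      replace (nu s t (Fin k) - / x ^ k * (nu s t (Fin k) * x ^ k + pgf_tail (nu s t) x (S k)))
        with (- (pgf_tail (nu s t) x (S k) / x ^ k)) by (field; lra).
      rewrite Rabs_Ropp, Rabs_pos_eq by (apply Rdiv_le_0_compat; lra).
      apply (Rmult_le_reg_r (x ^ k)); auto. unfold Rdiv. rewrite Rmult_assoc, Rinv_l by lra.
      simpl pow in T1. nra. }
  assert (Htail : forall k x, 0 < x < 1 -> cont_on_Delta (fun s t => pgf_tail (nu s t) x k)).
  { induction k as [|k IH]; intros x Hx; [exact (Hpgf x Hx)|].
    apply (cont_on_Delta_ext (fun s t => pgf_tail (nu s t) x k + - x ^ k * nu s t (Fin k))).
    - intros s t Hst. rewrite (pgf_tail_S _ _ (Hp s t Hst)) by lra. ring.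
    - apply cont_on_Delta_plus; [now apply IH|].
      apply (cont_on_Delta_mult (fun _ _ => - x ^ k)); [apply cont_on_Delta_const|apply Hcoef, IH]. }
  intro k. apply Hcoef, Htail.
Qed.

(* Let [c] be the supremum of the [r] in [[s, t]] with [Bad r t]; splitting at a point
   slightly to the right of [c] contradicts either the choice of [c] or the diagonal bound. *)
Lemma Delta_induction (Bad : R -> R -> Prop) :
  (forall s r t, 0 <= s -> s <= r -> r <= t -> Bad s t -> Bad s r \/ Bad r t) ->
  (forall c, 0 <= c -> exists del, 0 < del /\ forall s t, in_Delta s t -> Rabs (s - c) < del ->
      Rabs (t - c) < del -> ~ Bad s t) ->
  forall s t, in_Delta s t -> ~ Bad s t.
Proof.
  intros Hsplit Hdiag s0 t0 [Hs0 Hst] Hbad.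
  set (E := fun r => s0 <= r <= t0 /\ Bad r t0).
  destruct (completeness E) as [c [Hc1 Hc2]].
  - exists t0. intros r [Hr _]; lra.
  - exists s0. split; [lra|auto].
  - assert (Hsc : s0 <= c) by (apply Hc1; split; [lra|auto]).
    assert (Hct : c <= t0) by (apply Hc2; intros r [Hr _]; lra).
    destruct (Hdiag c ltac:(lra)) as [del [Hdel Hd]].
    assert (Hex : exists r, E r /\ c - del < r).
    { apply Classical_Prop.NNPP. intro Hn. assert (c <= c - del); [|lra].
      apply Hc2. intros r Hr. apply Rnot_lt_le. intro Hlt. apply Hn. now exists r. }
    destruct Hex as [r [[Hr1 Hr2] Hr3]].
    assert (Hrc : r <= c) by (apply Hc1; split; auto).
    set (r' := Rmin (c + del / 2) t0).
    assert (Hr'1 : r' <= c + del / 2) by apply Rmin_l.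
    assert (Hr'2 : r' <= t0) by apply Rmin_r.
    assert (Hr'3 : c <= r') by (apply Rmin_glb; lra).
    destruct (Hsplit r r' t0 ltac:(lra) ltac:(lra) Hr'2 Hr2) as [B|B].
    + apply (Hd r r'); auto; [split; lra|rewrite Rabs_left1 by lra; lra|rewrite Rabs_pos_eq by lra; lra].
    + destruct (Req_dec r' t0) as [E0|E0].
      * rewrite E0 in B.
        apply (Hd t0 t0); auto; [split; lra|rewrite Rabs_pos_eq by lra; lra|rewrite Rabs_pos_eq by lra; lra].
      * assert (r' = c + del / 2) by (unfold r', Rmin in *; destruct (Rle_dec (c + del / 2) t0); congruence).
        assert (r' <= c) by (apply Hc1; split; [lra|auto]). lra.
Qed.

(** * From branching kernels to evolution families *)

Section BranchingToEvolution.

Variable l : R -> R -> Ninf -> Ninf -> R.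
Hypothesis l_branching : branching_kernels l.

Let l_prob s t x : in_Delta s t -> is_prob (l s t x).
Proof. intro H. now apply (bk_prob _ l_branching). Qed.

Lemma l_conv_pow s t k y : in_Delta s t -> l s t (Fin k) y = conv_pow (l s t (Fin 1)) k y.
Proof.
  intro Hst. revert y. induction k; intro y; simpl; [now apply (bk_L5 _ l_branching)|].
  change (l s t (Fin (1 + k)) y = conv (l s t (Fin 1)) (conv_pow (l s t (Fin 1)) k) y).
  rewrite <- (bk_L4 _ l_branching s t 1 k y Hst). now apply conv_ext.
Qed.

Lemma l_coef_cont n k : cont_on_Delta (fun s t => l s t (Fin n) (Fin k)).
Proof.
  apply (cont_on_Delta_ext (fun s t => integ (l s t (Fin n)) (dirac (Fin k)))).
  - intros s t _. apply integ_dirac.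
  - apply (bk_L3 _ l_branching), dirac_continuous.
Qed.

Lemma pgfC_l_comp s t u z : in_Delta s t -> t <= u -> Cmod z <= 1 ->
  pgfC (l s u (Fin 1)) z = pgfC (l s t (Fin 1)) (pgfC (l t u (Fin 1)) z).
Proof.
  intros Hst Htu Hz. assert (Htu' := in_Delta_right s t u Hst Htu).
  set (w := pgfC (l t u (Fin 1)) z).
  assert (Hw : Cmod w <= 1) by (apply Cmod_pgfC_le_1; auto; apply l_prob; auto).
  rewrite (pgfC_ext _ (mixture (l s t (Fin 1)) (fun n => l t u (Fin n)))).
  2:{ intro n. rewrite <- (bk_L2 _ l_branching s t u (Fin 1) (Fin n) Hst Htu).
      apply kstar_mixture. intro y. now apply (bk_L6 _ l_branching). }
  apply (is_series_C_unique (fun k => RtoC (l s t (Fin 1) (Fin k)) * pgfC (l t u (Fin k)) z)%C).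
  - apply is_series_pgfC_mixture; auto.
  - eapply is_series_ext; [|exact (is_series_pgfC _ w (l_prob s t (Fin 1) Hst) Hw)].
    intro k. cbv beta. f_equal. rewrite (pgfC_ext _ (conv_pow (l t u (Fin 1)) k)) by (intro; now apply l_conv_pow).
    symmetry. apply pgfC_conv_pow; auto.
Qed.

(* Composition at [0] gives [q s t = pgf (l s r (Fin 1)) (q r t) <= q s r + q r t (1 - q s r)]
   for the extinction probabilities [q], so [q s t = 1] forces [q s r = 1] or [q r t = 1]. *)
Lemma l_extinction_lt_1 s t : in_Delta s t -> l s t (Fin 1) (Fin 0) < 1.
Proof.
  intro Hst. destruct (Rle_lt_or_eq_dec _ _ (prob_le_1 _ (Fin 0) (l_prob s t (Fin 1) Hst))) as [Hlt|Heq]; auto.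
  exfalso. refine (Delta_induction (fun s t => l s t (Fin 1) (Fin 0) = 1) _ _ s t Hst Heq).
  - intros s0 r t0 Hs0 Hsr Hrt Hb.
    assert (Hs0r : in_Delta s0 r) by (split; lra). assert (Hrt' : in_Delta r t0) by (split; lra).
    assert (E := pgfC_l_comp s0 r t0 0 Hs0r Hrt ltac:(rewrite Cmod_0; lra)).
    rewrite !pgfC_at_0 in E by (apply l_prob; split; lra).
    set (y := l r t0 (Fin 1) (Fin 0)) in *.
    assert (Hy : 0 <= y <= 1) by (split; [apply (l_prob r t0 (Fin 1) Hrt')|apply prob_le_1; auto]).
    rewrite pgfC_RtoC in E by (auto; rewrite Rabs_pos_eq; lra). apply RtoC_inj in E.
    destruct (Req_dec y 1) as [Hy1|Hy1]; [now right|left].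
    destruct (pgf_le_affine _ y (l_prob s0 r (Fin 1) Hs0r) Hy) as [_ Hb2].
    assert (Hp := prob_le_1 _ (Fin 0) (l_prob s0 r (Fin 1) Hs0r)).
    set (p := l s0 r (Fin 1) (Fin 0)) in *. nra.
  - intros c Hc. destruct (l_coef_cont 1 0 c c ltac:(split; lra) (1/2) ltac:(lra)) as [del [Hd Hdd]].
    exists del; split; auto. intros s0 t0 Hst0 H1 H2 Hb. specialize (Hdd s0 t0 Hst0 H1 H2).
    rewrite (bk_L1 _ l_branching c), dirac_other in Hdd by (lra || discriminate).
    rewrite Hb, Rminus_0_r, Rabs_R1 in Hdd. lra.
Qed.

Lemma Cmod_pgfC_l_lt_1 s t z : in_Delta s t -> inD z -> inD (pgfC (l s t (Fin 1)) z).
Proof.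
  intros Hst Hz. unfold inD in *. assert (0 <= Cmod z) by apply Cmod_ge_0.
  eapply Rle_lt_trans; [apply Cmod_pgfC_le; auto; lra|].
  destruct (pgf_le_affine _ (Cmod z) (l_prob s t (Fin 1) Hst) ltac:(lra)) as [_ Hb].
  eapply Rle_lt_trans; [exact Hb|]. assert (Hp := l_extinction_lt_1 s t Hst). nra.
Qed.

Lemma gen_fun_exists : exists F, gen_fun_of l F.
Proof.
  exists (fun s t z => pgfC (l s t (Fin 1)) z). intros s t z Hst Hz.
  apply is_pseries_RtoC_iff, is_series_pgfC; [auto|unfold inD in Hz; lra].
Qed.

Variable F : R -> R -> C -> C.
Hypothesis F_gen : gen_fun_of l F.

Lemma F_is_series s t z : in_Delta s t -> inD z ->
  is_series (fun n => RtoC (l s t (Fin 1) (Fin n)) * z ^ n)%C (F s t z).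
Proof. intros Hst Hz. now apply is_pseries_RtoC_iff, F_gen. Qed.

Lemma F_pgfC s t z : in_Delta s t -> inD z -> F s t z = pgfC (l s t (Fin 1)) z.
Proof.
  intros Hst Hz. apply (is_series_C_unique _ _ _ (F_is_series s t z Hst Hz)).
  apply is_series_pgfC; [auto|unfold inD in Hz; lra].
Qed.

Lemma F_Hol_DD s t : in_Delta s t -> Hol_DD (F s t).
Proof.
  intro Hst. split.
  - destruct (l_prob s t (Fin 1) Hst) as [H0 [He _]].
    apply (ex_derive_pseries_C (fun n => l s t (Fin 1) (Fin n))); [intro; apply H0|exact He|].
    intros z Hz. now apply F_is_series.
  - intros z Hz. rewrite F_pgfC by auto. now apply Cmod_pgfC_l_lt_1.
Qed.

Lemma F_locally_uniformly_cont s t : in_Delta s t -> forall r, 0 <= r < 1 ->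
  forall eps, 0 < eps -> exists del, 0 < del /\
  forall s' t', in_Delta s' t' -> Rabs (s' - s) < del -> Rabs (t' - t) < del ->
  forall z, Cmod z <= r -> Cmod (F s' t' z - F s t z) < eps.
Proof.
  intros Hst r Hr eps Heps.
  destruct (small_pseries_C r eps Hr Heps) as [N [eta [Heta Hsmall]]].
  destruct (cont_on_Delta_finite_family (fun j s t => l s t (Fin 1) (Fin j)) (fun j => l_coef_cont 1 j)
              s t Hst eta Heta N) as [del [Hdel Hd]].
  exists del; split; auto. intros s' t' Hst' Hs Ht z Hz.
  assert (Hz1 : inD z) by (unfold inD; lra).
  apply (Hsmall (fun n => l s' t' (Fin 1) (Fin n) - l s t (Fin 1) (Fin n)) z); auto.
  - intro n. destruct (l_prob s' t' (Fin 1) Hst') as [H1 _]. destruct (l_prob s t (Fin 1) Hst) as [H2 _].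
    assert (H3 := prob_le_1 _ (Fin n) (l_prob s' t' (Fin 1) Hst')).
    assert (H4 := prob_le_1 _ (Fin n) (l_prob s t (Fin 1) Hst)).
    specialize (H1 (Fin n)). specialize (H2 (Fin n)). apply Rabs_le; lra.
  - eapply is_series_ext; [|exact (is_series_minus _ _ _ _ (F_is_series s' t' z Hst' Hz1) (F_is_series s t z Hst Hz1))].
    intro n. cbv beta. rewrite RtoC_minus.
    change ((RtoC (l s' t' (Fin 1) (Fin n)) * z ^ n - RtoC (l s t (Fin 1) (Fin n)) * z ^ n)%C
            = ((RtoC (l s' t' (Fin 1) (Fin n)) - RtoC (l s t (Fin 1) (Fin n))) * z ^ n)%C).
    ring.
Qed.

Lemma F_top_rev_evol : top_rev_evol F.
Proof.
  constructor.
  - exact F_Hol_DD.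
  - intros s z Hs Hz. assert (Hss : in_Delta s s) by (split; lra).
    rewrite F_pgfC, (pgfC_ext _ (dirac (Fin 1))), pgfC_dirac by (auto; intro; now apply (bk_L1 _ l_branching)).
    apply Cpow_1_r.
  - intros s t u z Hst Htu Hz. assert (Htu' := in_Delta_right s t u Hst Htu).
    rewrite (F_pgfC t u z), (F_pgfC s t), (F_pgfC s u z) by eauto using Cmod_pgfC_l_lt_1, in_Delta_trans.
    apply pgfC_l_comp; auto. unfold inD in Hz; lra.
  - exact F_locally_uniformly_cont.
Qed.

Lemma F_in_PGF s t : in_Delta s t -> in_PGF (F s t).
Proof.
  intro Hst. destruct (l_prob s t (Fin 1) Hst) as [H0 [He _]].
  exists (fun n => l s t (Fin 1) (Fin n)). split; [auto|]. split; [auto|].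
  split; [apply (prob_fin_mass _ (l_prob s t (Fin 1) Hst))|].
  split; [|intros z Hz; now apply F_gen].
  intros [Hp0 _]. assert (H := l_extinction_lt_1 s t Hst). lra.
Qed.

End BranchingToEvolution.

(** * From evolution families to branching kernels *)

Definition pgf_coefs (p : nat -> R) (f : C -> C) : Prop :=
  (forall n, 0 <= p n) /\ ex_series p /\ Series p <= 1 /\
  ~ (p 0%nat = 1 /\ forall n, (0 < n)%nat -> p n = 0) /\
  forall z, inD z -> is_pseries (fun n => RtoC (p n)) z (f z).

Lemma pgf_coefs_0_lt_1 p f : pgf_coefs p f -> p 0%nat < 1.
Proof.
  intros [H0 [He [Hs [Hn _]]]].
  assert (Hp0 : p 0%nat <= 1) by (eapply Rle_trans; [apply (term_le_Series p 0)|]; auto).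
  destruct (Rle_lt_or_eq_dec _ _ Hp0) as [Hl|Heq]; auto. exfalso. apply Hn. split; auto.
  intros n Hn0. apply Rle_antisym; [|apply H0].
  assert (Hfirst : forall m, p 0%nat <= sum_f_R0 p m) by (induction m; simpl; [lra|specialize (H0 (S m)); lra]).
  destruct n as [|n]; [lia|]. assert (H := sum_f_R0_le_Series p (S n) H0 He). simpl in H.
  specialize (Hfirst n). lra.
Qed.

Section EvolutionToBranching.

Variable F : R -> R -> C -> C.
Hypothesis F_evol : top_rev_evol F.
Hypothesis F_pgf : forall s t, in_Delta s t -> in_PGF (F s t).

Definition offspring_coefs (s t : R) : nat -> R :=
  epsilon (inhabits (fun _ : nat => 0)) (fun p => pgf_coefs p (F s t)).

Lemma offspring_coefs_spec s t : in_Delta s t -> pgf_coefs (offspring_coefs s t) (F s t).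
Proof. intro H. unfold offspring_coefs. apply epsilon_spec, (F_pgf s t H). Qed.

Definition offspring (s t : R) : Ninf -> R := fun y =>
  match y with Fin n => offspring_coefs s t n | Inf => 1 - Series (offspring_coefs s t) end.

Lemma offspring_prob s t : in_Delta s t -> is_prob (offspring s t).
Proof.
  intro H. destruct (offspring_coefs_spec s t H) as [H0 [He [Hs _]]].
  split; [intros [n|]; simpl; auto; lra|]. split; [exact He|].
  change (Series (offspring_coefs s t) + (1 - Series (offspring_coefs s t)) = 1). ring.
Qed.

Lemma F_RtoC s t x : in_Delta s t -> Rabs x < 1 -> F s t (RtoC x) = RtoC (pgf (offspring s t) x).
Proof.
  intros Hst Hx. assert (Hin : inD (RtoC x)) by (unfold inD; now rewrite Cmod_R).
  destruct (offspring_coefs_spec s t Hst) as [_ [_ [_ [_ Hz]]]].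
  rewrite <- pgfC_RtoC by (auto using offspring_prob; lra).
  apply (is_series_C_unique (fun n => RtoC (offspring s t (Fin n)) * RtoC x ^ n)%C).
  - now apply is_pseries_RtoC_iff, Hz.
  - apply is_series_pgfC; [now apply offspring_prob|rewrite Cmod_R; lra].
Qed.

Lemma pgf_offspring_lt_1 s t x : in_Delta s t -> 0 <= x < 1 -> 0 <= pgf (offspring s t) x < 1.
Proof.
  intros Hst Hx. destruct (pgf_le_affine _ x (offspring_prob s t Hst) ltac:(lra)) as [H1 H2]. split; auto.
  assert (Hp0 := pgf_coefs_0_lt_1 _ _ (offspring_coefs_spec s t Hst)).
  simpl in H2. nra.
Qed.

Lemma pgf_offspring_comp s t u x : in_Delta s t -> t <= u -> 0 <= x < 1 ->
  pgf (offspring s u) x = pgf (offspring s t) (pgf (offspring t u) x).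
Proof.
  intros Hst Htu Hx. assert (Htu' := in_Delta_right s t u Hst Htu). assert (Hsu := in_Delta_trans s t u Hst Htu).
  assert (E := ev_comp F F_evol s t u (RtoC x) Hst Htu ltac:(unfold inD; rewrite Cmod_R, Rabs_pos_eq; lra)).
  destruct (pgf_offspring_lt_1 t u x Htu' Hx) as [Hy0 Hy1].
  rewrite (F_RtoC s u x), (F_RtoC t u x), (F_RtoC s t) in E by (auto; rewrite Rabs_pos_eq; lra).
  now apply RtoC_inj.
Qed.

Lemma offspring_diag s : 0 <= s -> forall y, offspring s s y = dirac (Fin 1) y.
Proof.
  intro Hs. assert (Hss : in_Delta s s) by (split; lra).
  apply (prob_eq_of_pgf _ _ 1 (offspring_prob s s Hss) (dirac_prob _) Rlt_0_1).
  intros x Hx. apply RtoC_inj. rewrite <- (F_RtoC s s x Hss) by (rewrite Rabs_pos_eq; lra).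
  rewrite (ev_id F F_evol s (RtoC x) Hs) by (unfold inD; rewrite Cmod_R, Rabs_pos_eq; lra).
  rewrite <- pgfC_RtoC by (apply dirac_prob || (rewrite Rabs_pos_eq; lra)).
  now rewrite pgfC_dirac, Cpow_1_r.
Qed.

Lemma pgf_offspring_cont x : 0 < x < 1 -> cont_on_Delta (fun s t => pgf (offspring s t) x).
Proof.
  intros Hx s t Hst eps Heps. destruct (ev_cont F F_evol s t Hst x ltac:(lra) eps Heps) as [del [Hdel H]].
  exists del; split; auto. intros s' t' Hst' Hs Ht.
  specialize (H s' t' Hst' Hs Ht (RtoC x) ltac:(rewrite Cmod_R, Rabs_pos_eq; lra)).
  rewrite !F_RtoC, <- RtoC_minus, Cmod_R in H by (auto; rewrite Rabs_pos_eq; lra). exact H.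
Qed.

Lemma conv_pow_offspring_cont m k : cont_on_Delta (fun s t => conv_pow (offspring s t) m (Fin k)).
Proof.
  revert k. induction m as [|m IH]; intro k; [exact (cont_on_Delta_const (dirac (Fin 0) (Fin k)))|].
  apply (cont_on_Delta_sum (fun i s t => offspring s t (Fin i) * conv_pow (offspring s t) m (Fin (k - i)))).
  intro i. apply (cont_on_Delta_mult (fun s t => offspring s t (Fin i))); [|apply IH].
  apply coef_cont_of_pgf_cont; [apply offspring_prob|apply pgf_offspring_cont].
Qed.

(* [m] individuals evolve as [m] independent copies of one individual. *)
Definition kernel_of (s t : R) (x : Ninf) : Ninf -> R :=
  match x with Fin m => conv_pow (offspring s t) m | Inf => dirac Inf end.

Lemma kernel_of_prob s t x : in_Delta s t -> is_prob (kernel_of s t x).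
Proof. intro H. destruct x; simpl; [apply conv_pow_prob, offspring_prob, H|apply dirac_prob]. Qed.

Lemma kernel_of_chapman s t u x z : in_Delta s t -> t <= u ->
  kstar (kernel_of s t) (kernel_of t u) x z = kernel_of s u x z.
Proof.
  intros Hst Htu. assert (Htu' := in_Delta_right s t u Hst Htu). assert (Hsu := in_Delta_trans s t u Hst Htu).
  rewrite kstar_mixture by reflexivity. destruct x as [m|].
  - revert z. set (A := conv_pow (offspring s t) m). set (B := fun k => conv_pow (offspring t u) k).
    assert (HA : is_prob A) by (apply conv_pow_prob, offspring_prob, Hst).
    assert (HB : forall k, is_prob (B k)) by (intro; apply conv_pow_prob, offspring_prob, Htu').
    apply (prob_eq_of_pgf _ _ 1); [now apply mixture_prob|now apply kernel_of_prob|lra|].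
    intros x Hx. assert (Hx1 : Rabs x <= 1) by (rewrite Rabs_pos_eq; lra).
    destruct (pgf_offspring_lt_1 t u x Htu' ltac:(lra)) as [Hy0 Hy1].
    set (y := pgf (offspring t u) x) in *.
    change (pgf (mixture A B) x = pgf (conv_pow (offspring s u) m) x).
    rewrite <- (is_series_unique _ _ (pgf_mixture A B HA HB x Hx1)).
    unfold B. rewrite (Series_ext _ (fun k => A (Fin k) * y ^ k))
      by (intro k; rewrite pgf_conv_pow; auto using offspring_prob).
    change (pgf A y = pgf (conv_pow (offspring s u) m) x). unfold A.
    rewrite !pgf_conv_pow by (auto using offspring_prob; rewrite Rabs_pos_eq; lra).
    unfold y. now rewrite <- pgf_offspring_comp by (auto; lra).
  - unfold mixture. simpl. rewrite dirac_same, Rmult_1_l.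
    rewrite (Series_ext _ (fun _ => 0)) by (intro k; rewrite dirac_other by discriminate; ring).
    rewrite (is_series_unique _ _ (is_series_single (fun _ => 0) 0 (fun _ _ => eq_refl))). ring.
Qed.

Lemma kernel_of_branching : branching_kernels kernel_of.
Proof.
  constructor.
  - intros; now apply kernel_of_prob.
  - intros s [m|] y Hs; [|reflexivity]. simpl.
    rewrite (conv_pow_ext _ _ m (offspring_diag s Hs)). apply conv_pow_dirac_1.
  - intros; now apply kernel_of_chapman.
  - intros n f Hf. apply (integ_cont (fun s t => conv_pow (offspring s t) n)); auto.
    + intros s t Hst. apply (kernel_of_prob s t (Fin n) Hst).
    + intro k. apply conv_pow_offspring_cont.
  - intros s t m n z Hst. apply conv_pow_add, offspring_prob, Hst.
  - reflexivity.
  - reflexivity.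
Qed.

Lemma kernel_of_gen_fun : gen_fun_of kernel_of F.
Proof.
  intros s t z Hst Hz. destruct (offspring_coefs_spec s t Hst) as [_ [_ [_ [_ H]]]].
  eapply is_pseries_ext; [|exact (H z Hz)]. intro n.
  change (RtoC (offspring s t (Fin n)) = RtoC (conv_pow (offspring s t) 1 (Fin n))).
  now rewrite (conv_pow_1 _ (offspring_prob s t Hst)).
Qed.

Lemma kernel_of_unique (l : R -> R -> Ninf -> Ninf -> R) : branching_kernels l -> gen_fun_of l F ->
  forall s t x y, in_Delta s t -> l s t x y = kernel_of s t x y.
Proof.
  intros Hl Hg s t x y Hst.
  assert (H1 : forall y, l s t (Fin 1) y = offspring s t y).
  { apply (prob_eq_of_pgf _ _ 1); [now apply (bk_prob _ Hl)|now apply offspring_prob|lra|].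
    intros x0 Hx0. assert (Hx0a : Rabs x0 < 1) by (rewrite Rabs_pos_eq; lra).
    apply RtoC_inj. rewrite <- (F_RtoC s t x0 Hst Hx0a), <- pgfC_RtoC by (try apply (bk_prob _ Hl); auto; lra).
    symmetry. apply (F_pgfC l Hl F Hg); auto. unfold inD. now rewrite Cmod_R. }
  destruct x as [m|]; simpl.
  - rewrite (l_conv_pow l Hl s t m y Hst). now apply conv_pow_ext.
  - now apply (bk_L6 _ Hl).
Qed.

End EvolutionToBranching.

Theorem mainTheorem16 :
  (forall l : R -> R -> Ninf -> Ninf -> R,
     branching_kernels l ->
     (exists F : R -> R -> C -> C, gen_fun_of l F) /\
     (forall F : R -> R -> C -> C, gen_fun_of l F ->
        top_rev_evol F /\ (forall s t, in_Delta s t -> in_PGF (F s t))))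
  /\
  (forall F : R -> R -> C -> C,
     top_rev_evol F -> (forall s t, in_Delta s t -> in_PGF (F s t)) ->
     exists l : R -> R -> Ninf -> Ninf -> R,
       branching_kernels l /\ gen_fun_of l F /\
       (forall l' : R -> R -> Ninf -> Ninf -> R,
          branching_kernels l' -> gen_fun_of l' F ->
          forall s t x y, in_Delta s t -> l' s t x y = l s t x y)).
Proof.
  split.
  - intros l Hl. split; [exact (gen_fun_exists l Hl)|].
    intros F HF. split; [exact (F_top_rev_evol l Hl F HF)|].
    intros s t Hst. exact (F_in_PGF l Hl F HF s t Hst).
  - intros F HF HP. exists (kernel_of F). split; [exact (kernel_of_branching F HF HP)|].
    split; [exact (kernel_of_gen_fun F HP)|].
    intros l Hl Hg s t x y Hst. exact (kernel_of_unique F HP l Hl Hg s t x y Hst).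
Qed.
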